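(* Let $s\in\mathbb R$, $p,q\in(0,+\infty]$ and $x_0\in\mathbb R^d$, and assume the wavelet system satisfies the dyadic covering property. Then the set of sequences $\mathcal D\in b^{s,q}_p$ such that $\delta_{\mathcal D}(x_0)=-s+\frac dp$ is prevalent in $b^{s,q}_p$, residual in $b^{s,q}_p$ (it contains a countable intersection of dense open subsets), and maximal lineable in $b^{s,q}_p$ (its union with $\{0\}$ contains a vector subspace whose Hamel dimension equals that of $b^{s,q}_p$).
   Context: Setting: integers $d,N\ge1$, bounded fast-decaying $\psi^{(1)},\dots,\psi^{(N)}:\mathbb R^d\to\mathbb C$, wavelets $\psi^{(i)}_{j,k}(x)=\psi^{(i)}(2^jx-k)$, $j\ge0$, $k\in\mathbb Z^d$; dyadic cubes $\lambda_{j,k}=\prod_{m=1}^d[k_m2^{-j},(k_m+1)2^{-j})$ of scale $j$; coefficients indexed by $(i,\lambda)$; $\Lambda_j$ = pairs $(i,\lambda)$ with $\lambda$ of scale $j$. $b^{s,q}_p$: sequences $(c^{(i)}_\lambda)$ with $\big(\big(\sum_{(i,\lambda)\in\Lambda_j}|c^{(i)}_\lambda2^{(s-d/p)j}|^p\big)^{1/p}\big)_{j\ge0}\in\ell^q$ (supremum if $p=\infty$; $d/p=0$ if $p=\infty$), a complete metric vector space for the $\ell^q$ (quasi-)norm. Divergence exponent $\delta_{\mathcal C}(x)$: supremum of $\gamma$ such that there exist $C>0$ and $(i_n,j_n,k_n)$ with $j_n\to\infty$ and $|c^{(i_n)}_{j_n,k_n}\psi^{(i_n)}_{j_n,k_n}(x)|\ge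 C2^{\gamma j_n}$. Dyadic covering property: there exist $C_0>0$ and finitely many triplets $(i_l,j_l,k_l)$ with $j_l\ge1$ such that every $x\in[0,1)^d$ has some $l$ with $|\psi^{(i_l)}(2^{j_l}x-k_l)|\ge C_0$. Prevalence: in a complete metric vector space $E$, a Borel set $A$ is Haar-null if there is a compactly supported Borel probability measure $\mu$ with $\mu(x+A)=0$ for all $x\in E$; a set is Haar-null if contained in a Haar-null Borel set; its complement is then called prevalent. *)

From Stdlib Require Import Reals List ZArith Classical ClassicalEpsilon.
From Stdlib Require Fin.
Open Scope R_scope.

Definition Cpx := (R * R)%type.
Definition C0 : Cpx := (0, 0).
Definition Cadd (a b : Cpx) : Cpx := (fst a + fst b, snd a + snd b).
Definition Cmul (a b : Cpx) : Cpx :=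
  (fst a * fst b - snd a * snd b, fst a * snd b + snd a * fst b).
Definition Copp (a : Cpx) : Cpx := (- fst a, - snd a).
Definition Cmod (a : Cpx) : R := sqrt (fst a ^ 2 + snd a ^ 2).

Fixpoint Rvec (d : nat) : Type :=
  match d with O => unit | S d' => (R * Rvec d')%type end.
Fixpoint Zvec (d : nat) : Type :=
  match d with O => unit | S d' => (Z * Zvec d')%type end.

Fixpoint dil_sub (d : nat) : R -> Rvec d -> Zvec d -> Rvec d :=
  match d return R -> Rvec d -> Zvec d -> Rvec d with
  | O => fun _ _ _ => tt
  | S d' => fun a x k => (a * fst x - IZR (fst k), dil_sub d' a (snd x) (snd k))
  end.

Fixpoint Rvec_norm2 (d : nat) : Rvec d -> R :=
  match d return Rvec d -> R with
  | O => fun _ => 0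
  | S d' => fun x => fst x ^ 2 + Rvec_norm2 d' (snd x)
  end.
Definition Rvec_norm (d : nat) (x : Rvec d) : R := sqrt (Rvec_norm2 d x).

Fixpoint in_unit_cube (d : nat) : Rvec d -> Prop :=
  match d return Rvec d -> Prop with
  | O => fun _ => True
  | S d' => fun x => 0 <= fst x < 1 /\ in_unit_cube d' (snd x)
  end.

Definition wav (d N : nat) (psi : Fin.t N -> Rvec d -> Cpx)
  (i : Fin.t N) (j : nat) (k : Zvec d) (x : Rvec d) : Cpx :=
  psi i (dil_sub d (2 ^ j) x k).

Definition bounded_fun (d : nat) (f : Rvec d -> Cpx) : Prop :=
  exists M, forall x, Cmod (f x) <= M.

Definition fast_decaying (d : nat) (f : Rvec d -> Cpx) : Prop :=
  forall M : R, exists K : R, forall x,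
    Cmod (f x) <= K * Rpower (1 + Rvec_norm d x) (- M).

Definition dyadic_covering (d N : nat) (psi : Fin.t N -> Rvec d -> Cpx) : Prop :=
  exists C0' : R, 0 < C0' /\
  exists l : list (Fin.t N * nat * Zvec d),
    (forall t, In t l -> (1 <= snd (fst t))%nat) /\
    forall x, in_unit_cube d x ->
      exists t, In t l /\ Cmod (wav d N psi (fst (fst t)) (snd (fst t)) (snd t) x) >= C0'.

Inductive Exp := ExpF (r : R) | ExpInf.
Definition Exp_pos (p : Exp) : Prop :=
  match p with ExpF r => 0 < r | ExpInf => True end.
Definition inv_exp (p : Exp) : R :=
  match p with ExpF r => / r | ExpInf => 0 end.

(* x^a for x >= 0 (with 0^a = 0, a > 0) *)
Definition rpow (x a : R) : R := if Rle_dec x 0 then 0 else Rpower x a.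

(* ---------- extended nonnegative sups and sums (None = +infinity) ---------- *)
Definition esup (E : R -> Prop) : option R :=
  match excluded_middle_informative (bound E /\ exists x, E x) with
  | left H => Some (proj1_sig (completeness E (proj1 H) (proj2 H)))
  | right _ => None
  end.

Definition fsum {T : Type} (f : T -> R) (l : list T) : R :=
  fold_right (fun x acc => f x + acc) 0 l.

Definition esum {T : Type} (f : T -> R) : option R :=
  esup (fun Ssum => exists l, NoDup l /\ Ssum = fsum f l).

(* coefficients c^{(i)}_{j,k} ; the cube lambda_{j,k} is indexed by (j,k) *)
Definition Coef (d N : nat) : Type := Fin.t N -> nat -> Zvec d -> Cpx.

Definition czero (d N : nat) : Coef d N := fun _ _ _ => C0.
Definition cadd (d N : nat) (a b : Coef d N) : Coef d N :=
  fun i j k => Cadd (a i j k) (b i j k).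
Definition cscal (d N : nat) (z : Cpx) (a : Coef d N) : Coef d N :=
  fun i j k => Cmul z (a i j k).
Definition csub (d N : nat) (a b : Coef d N) : Coef d N :=
  fun i j k => Cadd (a i j k) (Copp (b i j k)).

Definition level (d N : nat) (s : R) (p : Exp) (c : Coef d N) (j : nat) : option R :=
  match p with
  | ExpF r =>
      match esum (fun ik : Fin.t N * Zvec d =>
              rpow (Cmod (c (fst ik) j (snd ik)) * Rpower 2 ((s - INR d / r) * INR j)) r) with
      | Some Ssum => Some (rpow Ssum (/ r))
      | None => None
      end
  | ExpInf => esup (fun v => exists i k, v = Cmod (c i j k) * Rpower 2 (s * INR j))
  end.

Definition levval (d N : nat) (s : R) (p : Exp) (c : Coef d N) (j : nat) : R :=
  match level d N s p c j with Some v => v | None => 0 end.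

Definition bnorm (d N : nat) (s : R) (p q : Exp) (c : Coef d N) : option R :=
  match excluded_middle_informative (forall j, level d N s p c j <> None) with
  | right _ => None
  | left _ =>
      match q with
      | ExpF r =>
          match esum (fun j : nat => rpow (levval d N s p c j) r) with
          | Some Ssum => Some (rpow Ssum (/ r))
          | None => None
          end
      | ExpInf => esup (fun v => exists j, v = levval d N s p c j)
      end
  end.

Definition in_b (d N : nat) (s : R) (p q : Exp) (c : Coef d N) : Prop :=
  exists r, bnorm d N s p q c = Some r.

Definition bnear (d N : nat) (s : R) (p q : Exp) (x y : Coef d N) (eps : R) : Prop :=
  exists r, bnorm d N s p q (csub d N y x) = Some r /\ r < eps.

(* set of gamma admissible in the definition; delta_c(x) is its supremum *)
Definition div_set (d N : nat) (psi : Fin.t N -> Rvec d -> Cpx) (c : Coef d N)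
  (x : Rvec d) (gamma : R) : Prop :=
  exists K : R, 0 < K /\
  exists (iseq : nat -> Fin.t N) (jseq : nat -> nat) (kseq : nat -> Zvec d),
    (forall M : nat, exists n0, forall n, (n0 <= n)%nat -> (M <= jseq n)%nat) /\
    forall n, Cmod (Cmul (c (iseq n) (jseq n) (kseq n))
                         (wav d N psi (iseq n) (jseq n) (kseq n) x))
              >= K * Rpower 2 (gamma * INR (jseq n)).

Definition openE {X : Type} (E : X -> Prop) (near : X -> X -> R -> Prop)
  (U : X -> Prop) : Prop :=
  (forall x, U x -> E x) /\
  forall x, U x -> exists eps, 0 < eps /\ forall y, E y -> near x y eps -> U y.

Definition denseE {X : Type} (E : X -> Prop) (near : X -> X -> R -> Prop)
  (U : X -> Prop) : Prop :=
  forall x, E x -> forall eps, 0 < eps -> exists y, U y /\ near x y eps.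

Definition sigma_alg {X : Type} (E : X -> Prop) (F : (X -> Prop) -> Prop) : Prop :=
  F E /\
  (forall B, F B -> F (fun x => E x /\ ~ B x)) /\
  (forall Bn : nat -> X -> Prop, (forall n, F (Bn n)) -> F (fun x => exists n, Bn n x)).

Definition borel {X : Type} (E : X -> Prop) (near : X -> X -> R -> Prop)
  (B : X -> Prop) : Prop :=
  forall F, sigma_alg E F -> (forall U, openE E near U -> F U) -> F B.

Definition compactE {X : Type} (E : X -> Prop) (near : X -> X -> R -> Prop)
  (K : X -> Prop) : Prop :=
  (forall x, K x -> E x) /\
  forall Fam : (X -> Prop) -> Prop,
    (forall U, Fam U -> openE E near U) ->
    (forall x, K x -> exists U, Fam U /\ U x) ->
    exists l : list (X -> Prop),
      (forall U, In U l -> Fam U) /\ forall x, K x -> exists U, In U l /\ U x.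

Definition borel_prob {X : Type} (E : X -> Prop) (near : X -> X -> R -> Prop)
  (mu : (X -> Prop) -> R) : Prop :=
  (forall B, borel E near B -> 0 <= mu B) /\
  mu E = 1 /\
  (forall B B', borel E near B -> (forall x, B x <-> B' x) -> mu B' = mu B) /\
  (forall Bn : nat -> X -> Prop,
     (forall n, borel E near (Bn n)) ->
     (forall m n x, m <> n -> Bn m x -> Bn n x -> False) ->
     infinite_sum (fun n => mu (Bn n)) (mu (fun x => exists n, Bn n x))).

Definition compactly_supported {X : Type} (E : X -> Prop) (near : X -> X -> R -> Prop)
  (mu : (X -> Prop) -> R) : Prop :=
  exists K, compactE E near K /\ mu K = 1.

(* Borel Haar-null set; sub y x = y - x, so (fun y => B (sub y x)) is x + B *)
Definition haar_null_borel {X : Type} (E : X -> Prop) (near : X -> X -> R -> Prop)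
  (sub : X -> X -> X) (B : X -> Prop) : Prop :=
  borel E near B /\
  exists mu, borel_prob E near mu /\ compactly_supported E near mu /\
    forall x, E x -> mu (fun y => E y /\ B (sub y x)) = 0.

Definition haar_null {X : Type} (E : X -> Prop) (near : X -> X -> R -> Prop)
  (sub : X -> X -> X) (A : X -> Prop) : Prop :=
  exists B, haar_null_borel E near sub B /\ forall x, A x -> B x.

Definition prevalent {X : Type} (E : X -> Prop) (near : X -> X -> R -> Prop)
  (sub : X -> X -> X) (P : X -> Prop) : Prop :=
  haar_null E near sub (fun x => E x /\ ~ P x).

Definition residual {X : Type} (E : X -> Prop) (near : X -> X -> R -> Prop)
  (P : X -> Prop) : Prop :=
  exists Un : nat -> X -> Prop,
    (forall n, openE E near (Un n) /\ denseE E near (Un n)) /\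
    forall x, E x -> (forall n, Un n x) -> P x.

Definition subspace {X : Type} (E : X -> Prop) (zero : X) (add : X -> X -> X)
  (scal : Cpx -> X -> X) (W : X -> Prop) : Prop :=
  (forall x, W x -> E x) /\ W zero /\
  (forall x y, W x -> W y -> W (add x y)) /\
  (forall a x, W x -> W (scal a x)).

Definition lin_comb {X : Type} (zero : X) (add : X -> X -> X) (scal : Cpx -> X -> X)
  (l : list (Cpx * X)) : X :=
  fold_right (fun ax acc => add (scal (fst ax) (snd ax)) acc) zero l.

Definition lin_indep {X : Type} (zero : X) (add : X -> X -> X) (scal : Cpx -> X -> X)
  (B : X -> Prop) : Prop :=
  forall l : list (Cpx * X), NoDup (map snd l) -> (forall ax, In ax l -> B (snd ax)) ->
    lin_comb zero add scal l = zero -> forall ax, In ax l -> fst ax = C0.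

Definition hamel_basis {X : Type} (zero : X) (add : X -> X -> X) (scal : Cpx -> X -> X)
  (B W : X -> Prop) : Prop :=
  (forall x, B x -> W x) /\ lin_indep zero add scal B /\
  forall w, W w -> exists l : list (Cpx * X),
    (forall ax, In ax l -> B (snd ax)) /\ w = lin_comb zero add scal l.

Definition same_card {X : Type} (B1 B2 : X -> Prop) : Prop :=
  exists f : X -> X,
    (forall x, B1 x -> B2 (f x)) /\
    (forall x y, B1 x -> B1 y -> f x = f y -> x = y) /\
    (forall y, B2 y -> exists x, B1 x /\ f x = y).

Definition max_lineable {X : Type} (E : X -> Prop) (zero : X) (add : X -> X -> X)
  (scal : Cpx -> X -> X) (P : X -> Prop) : Prop :=
  exists V, subspace E zero add scal V /\ (forall x, V x -> P x \/ x = zero) /\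
  exists BV BE, hamel_basis zero add scal BV V /\ hamel_basis zero add scal BE E /\
    same_card BV BE.

Definition prevalent_b (d N : nat) (s : R) (p q : Exp) (P : Coef d N -> Prop) : Prop :=
  prevalent (in_b d N s p q) (bnear d N s p q) (csub d N) P.
Definition residual_b (d N : nat) (s : R) (p q : Exp) (P : Coef d N -> Prop) : Prop :=
  residual (in_b d N s p q) (bnear d N s p q) P.
Definition max_lineable_b (d N : nat) (s : R) (p q : Exp) (P : Coef d N -> Prop) : Prop :=
  max_lineable (in_b d N s p q) (czero d N) (cadd d N) (cscal d N) P.

(** The critical exponent [gamma = -s + d/p] bounds the divergence set of
    every sequence of [b^{s,q}_p], because [|c_{j,k}| <= ||c|| 2^{(-s+d/p) j}]
    and the wavelets are bounded.  The dyadic covering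
    property yields, at every scale [J], a cube of scale in [(J, J+L]] whose
    wavelet is [>= C0] at [x0]; picking such cubes at quadratically spread
    scales [j_m >= m^2] gives an injective bounded linear embedding [T] of
    [b^{s,q}_p] into sequences supported on these cubes, the coefficient
    [c_{sig m}] being placed on cube [m] with an extra factor [2^{-m}].  If
    [sig] enumerates every index infinitely often, every nonzero [T c] has
    coefficients [>= K 2^{(gamma - 1/m) j_m}] along [j_m -> oo], hence
    divergence exponent exactly [gamma].
    - Lineability: the image under [T] of the whole space.
    - Prevalence: the probe measure is Lebesgue measure on the segment
      [t |-> T (t e_0)]; two points [t <> t'] of a translate of the bad set
      would make [T ((t - t') e_0)] non-critical, so each translate meets the
      segment in at most one point.
    - Residuality: the sets "some coefficient with [j >= n] exceeds
      [2^{(gamma - 1/(n+1)) j}] at [x0]" are open, and dense because one can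
      perturb a single coefficient on a good cube of large scale. *)

From Stdlib Require Import Reals ZArith Lra Lia List.
From Stdlib Require Import Classical ClassicalEpsilon FunctionalExtensionality PropExtensionality.
From Stdlib Require Cantor.
From Coquelicot Require Complex.
From mathcomp Require classical_sets.
Open Scope R_scope.

Lemma Cmod_ge0 a : 0 <= Cmod a.
Proof. apply sqrt_pos. Qed.

Lemma Cmod_mul a b : Cmod (Cmul a b) = Cmod a * Cmod b.
Proof. exact (Complex.Cmod_mult a b). Qed.

Lemma Cmod_add a b : Cmod (Cadd a b) <= Cmod a + Cmod b.
Proof. exact (Complex.Cmod_triangle a b). Qed.

Lemma Cmod_C0 : Cmod C0 = 0.
Proof. unfold Cmod, C0; simpl. replace (0*(0*1)+0*(0*1)) with 0 by ring. apply sqrt_0. Qed.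

Lemma Cmod_opp a : Cmod (Copp a) = Cmod a.
Proof. unfold Cmod, Copp; simpl. f_equal. ring. Qed.

Lemma Cmod_eq0 a : Cmod a = 0 -> a = C0.
Proof.
  intros H. destruct a as [x y]. unfold Cmod in H; simpl in H.
  apply sqrt_eq_0 in H; [|nra].
  assert (x = 0) by nra. assert (y = 0) by nra. subst. reflexivity.
Qed.

Lemma Cmod_gt0 a : a <> C0 -> 0 < Cmod a.
Proof. intros H. destruct (Cmod_ge0 a) as [|E]; auto. exfalso; apply H, Cmod_eq0; auto. Qed.

Lemma Cmod_real t : Cmod (t, 0) = Rabs t.
Proof.
  unfold Cmod; simpl. replace (t*(t*1)+0*(0*1)) with (t*t) by ring. apply sqrt_Rsqr_abs.
Qed.

Lemma Cmod_mul_real a t : 0 <= t -> Cmod (Cmul a (t, 0)) = Cmod a * t.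
Proof. intros H. rewrite Cmod_mul, Cmod_real, Rabs_pos_eq; auto. Qed.

Lemma Cmod_sub_ge a b : Cmod a - Cmod (Cadd a (Copp b)) <= Cmod b.
Proof.
  assert (E : Cadd (Cadd a (Copp b)) b = a).
  { destruct a, b; unfold Cadd, Copp; simpl; f_equal; ring. }
  pose proof (Cmod_add (Cadd a (Copp b)) b) as H. rewrite E in H. lra.
Qed.

Lemma Cadd_opp_r a : Cadd a (Copp a) = C0.
Proof. destruct a; unfold Cadd, Copp, C0; simpl; f_equal; ring. Qed.

Definition Cinv (a : Cpx) : Cpx :=
  (fst a / (fst a ^ 2 + snd a ^ 2), - snd a / (fst a ^ 2 + snd a ^ 2)).

Lemma Cinv_l a : a <> C0 -> Cmul (Cinv a) a = (1, 0).
Proof.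
  intros H. destruct a as [x y]. unfold Cinv, Cmul; cbn [fst snd].
  assert (x ^ 2 + y ^ 2 <> 0).
  { intros E. apply H. assert (x = 0) by nra. assert (y = 0) by nra. subst; reflexivity. }
  f_equal; field; auto.
Qed.

Lemma Cadd_mul_eq0 a w L : a <> C0 -> Cadd L (Cmul a w) = C0 -> w = Cmul (Copp (Cinv a)) L.
Proof.
  intros Ha E. pose proof (Cinv_l a Ha) as Hi. destruct (Cinv a) as [b1 b2].
  destruct a as [a1 a2], w as [w1 w2], L as [L1 L2].
  unfold Cadd, Cmul, Copp, C0 in *. cbn [fst snd] in *. injection E as E1 E2. injection Hi as H1 H2.
  assert (L1 = -(a1*w1 - a2*w2)) by lra. assert (L2 = -(a1*w2+a2*w1)) by lra. subst L1 L2. f_equal.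
  - transitivity (w1 * (b1*a1 - b2*a2) - w2 * (b1*a2 + b2*a1)); [rewrite H1, H2; ring | ring].
  - transitivity (w2 * (b1*a1 - b2*a2) + w1 * (b1*a2 + b2*a1)); [rewrite H1, H2; ring | ring].
Qed.

Lemma rpow_ge0 x a : 0 <= rpow x a.
Proof. unfold rpow; destruct (Rle_dec x 0). lra. unfold Rpower; left; apply exp_pos. Qed.

Lemma rpow_pos x a : 0 < x -> rpow x a = Rpower x a.
Proof. intros H; unfold rpow; destruct (Rle_dec x 0); [lra|reflexivity]. Qed.

Lemma rpow_0 a : rpow 0 a = 0.
Proof. unfold rpow; destruct (Rle_dec 0 0); [reflexivity|lra]. Qed.

Lemma rpow_rpow_inv x r : 0 <= x -> 0 < r -> rpow (rpow x r) (/ r) = x.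
Proof.
  intros Hx Hr. destruct Hx as [Hx|<-].
  - rewrite (rpow_pos x) by lra. rewrite rpow_pos by (unfold Rpower; apply exp_pos).
    rewrite Rpower_mult, Rinv_r by lra. apply Rpower_1; lra.
  - rewrite !rpow_0. reflexivity.
Qed.

Lemma rpow_inv_rpow x r : 0 <= x -> 0 < r -> rpow (rpow x (/ r)) r = x.
Proof.
  intros. pattern r at 2; rewrite <- (Rinv_inv r).
  apply rpow_rpow_inv; auto. apply Rinv_0_lt_compat; auto.
Qed.

Lemma rpow_le x y r : 0 <= x <= y -> 0 < r -> rpow x r <= rpow y r.
Proof.
  intros [Hx Hxy] Hr. destruct Hx as [Hx|<-].
  - rewrite !rpow_pos by lra. unfold Rpower.
    destruct Hxy as [Hxy|<-]; [|lra]. left. apply exp_increasing.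
    apply Rmult_lt_compat_l; auto. apply ln_increasing; auto.
  - rewrite rpow_0. apply rpow_ge0.
Qed.

Lemma rpow_mul x y r : 0 <= x -> 0 <= y -> rpow (x * y) r = rpow x r * rpow y r.
Proof.
  intros [Hx|<-] [Hy|<-].
  - rewrite !rpow_pos by nra. unfold Rpower. rewrite ln_mult by auto. rewrite <- exp_plus. f_equal; ring.
  - rewrite Rmult_0_r, !rpow_0. ring.
  - rewrite Rmult_0_l, !rpow_0. ring.
  - rewrite Rmult_0_l, !rpow_0. ring.
Qed.

Lemma rpow_le_reg x y r : 0 <= x -> 0 <= y -> 0 < r -> rpow x r <= rpow y r -> x <= y.
Proof.
  intros Hx Hy Hr H. destruct (Rle_dec x y) as [|n]; auto. exfalso.
  assert (y < x) by lra. pose proof (rpow_le y x r (conj Hy (Rlt_le _ _ H0)) Hr).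
  destruct Hy as [Hy|<-].
  - rewrite !rpow_pos in H, H1 by lra. unfold Rpower in H.
    assert (exp (r * ln y) < exp (r * ln x)).
    { apply exp_increasing, Rmult_lt_compat_l; auto. apply ln_increasing; auto. }
    lra.
  - rewrite rpow_0, rpow_pos in H by lra. unfold Rpower in H. pose proof (exp_pos (r * ln x)). lra.
Qed.

Lemma Rpower2_pos a : 0 < Rpower 2 a.
Proof. apply exp_pos. Qed.

Lemma exists_nat_gt A : exists n : nat, A < INR n.
Proof.
  destruct (archimed A) as [H1 _]. destruct (Z.le_gt_cases (up A) 0) as [H|H].
  - exists 0%nat. simpl. apply IZR_le in H. lra.
  - exists (Z.to_nat (up A)). rewrite INR_IZR_INZ, Z2Nat.id by lia. lra.
Qed.

Lemma Rpower2_unbounded delta A : 0 < delta ->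
  exists J0 : nat, forall j : nat, (J0 <= j)%nat -> A < Rpower 2 (delta * INR j).
Proof.
  intros Hd. assert (Hl : 0 < ln 2) by (pose proof ln_lt_2; lra).
  destruct (exists_nat_gt (A / (delta * ln 2))) as [J0 HJ]. exists J0. intros j Hj.
  unfold Rpower. apply le_INR in Hj.
  assert (A < delta * INR j * ln 2).
  { assert (A / (delta * ln 2) < INR j) by lra.
    apply (Rmult_lt_compat_r (delta * ln 2)) in H; [|nra].
    unfold Rdiv in H. rewrite Rmult_assoc, Rinv_l in H by nra. lra. }
  destruct (Req_dec (delta * INR j * ln 2) 0) as [Z|Z].
  - rewrite Z in H. pose proof (exp_pos (delta * INR j * ln 2)). lra.
  - pose proof (exp_ineq1 _ Z). lra.
Qed.

Lemma inv_INR_S_le m m' : (m <= m')%nat -> / INR (S m') <= / INR (S m).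
Proof. intros H. apply Rinv_le_contravar. apply lt_0_INR; lia. apply le_INR; lia. Qed.

Lemma inv_INR_S_lt e : 0 < e -> exists m : nat, / INR (S m) < e.
Proof.
  intros He. destruct (exists_nat_gt (/ e)) as [m Hm]. exists m.
  assert (0 < INR (S m)) by (apply lt_0_INR; lia).
  rewrite <- (Rinv_inv e). apply Rinv_lt_contravar.
  - apply Rmult_lt_0_compat; [apply Rinv_0_lt_compat|]; lra.
  - rewrite S_INR; lra.
Qed.

Lemma fsum_ge0 {T} (f : T -> R) l : (forall x, 0 <= f x) -> 0 <= fsum f l.
Proof. intros H; induction l; simpl; [lra|]. specialize (H a); lra. Qed.

Lemma fsum_app {T} (f : T -> R) a b : fsum f (a ++ b) = fsum f a + fsum f b.
Proof. induction a; simpl; [ring|]. rewrite IHa; ring. Qed.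

Lemma fsum_map {T U} (g : U -> R) (e : T -> U) l : fsum g (map e l) = fsum (fun m => g (e m)) l.
Proof. induction l; simpl; auto. rewrite IHl; auto. Qed.

Lemma fsum_le {T} (f g : T -> R) l : (forall x, In x l -> f x <= g x) -> fsum f l <= fsum g l.
Proof.
  induction l; simpl; intros H; [lra|].
  pose proof (H a (or_introl eq_refl)). assert (fsum f l <= fsum g l) by (apply IHl; auto). lra.
Qed.

Lemma fsum_ext_in {T} (f g : T -> R) l : (forall x, In x l -> f x = g x) -> fsum f l = fsum g l.
Proof. induction l; simpl; intros H; auto. rewrite H, IHl; auto. Qed.

Lemma fsum_scal {T} (a : R) (f : T -> R) l : fsum (fun x => a * f x) l = a * fsum f l.
Proof. induction l; simpl; [ring|]. rewrite IHl; ring. Qed.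

Lemma fsum_incl {T} (g : T -> R) (a b : list T) :
  (forall x, 0 <= g x) -> NoDup a -> (forall x, In x a -> g x <> 0 -> In x b) ->
  fsum g a <= fsum g b.
Proof.
  intros Hg Hnd. revert b. induction Hnd as [|x a Hx Hnd IH]; intros b Hin.
  - simpl. apply fsum_ge0; auto.
  - simpl. destruct (Req_dec (g x) 0) as [E|E].
    + rewrite E, Rplus_0_l. apply IH. intros y Hy. apply Hin. right; auto.
    + assert (Hb : In x b) by (apply Hin; [left|]; auto).
      destruct (in_split x b Hb) as [b1 [b2 ->]].
      assert (fsum g a <= fsum g (b1 ++ b2)).
      { apply IH. intros y Hy Hgy. assert (H : In y (b1 ++ x :: b2)) by (apply Hin; [right|]; auto).
        apply in_app_or in H. apply in_or_app. destruct H as [H|[H|H]]; auto. subst; contradiction. }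
      rewrite fsum_app in *. simpl. lra.
Qed.

Lemma fsum_update_le {T} (f f' : T -> R) (pt : T) a : (forall x, 0 <= f x) ->
  0 <= f' pt -> (forall x, x <> pt -> f' x = f x) -> NoDup a -> fsum f' a <= fsum f a + f' pt.
Proof.
  intros H0 Hp Hm Hnd. induction Hnd as [|x a Hx Hnd IH]; simpl.
  - lra.
  - destruct (classic (x = pt)) as [->|Hne].
    + rewrite (fsum_ext_in f' f a). pose proof (H0 pt). lra.
      intros y Hy. apply Hm. intros ->. contradiction.
    + rewrite Hm by auto. lra.
Qed.

Lemma geom_sum_le a n : 0 <= a < 1 -> fsum (fun m => a ^ m) (seq 0 n) <= / (1 - a).
Proof.
  intros Ha. assert (E : fsum (fun m => a ^ m) (seq 0 n) * (1 - a) = 1 - a ^ n).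
  { induction n; [simpl; ring|]. rewrite seq_S, fsum_app. simpl. rewrite Rmult_plus_distr_r, IHn. ring. }
  assert (0 <= a ^ n) by (apply pow_le; lra).
  apply (Rmult_le_reg_r (1 - a)); [lra|]. rewrite E, Rinv_l by lra. lra.
Qed.

Lemma esup_lub S v : esup S = Some v -> is_lub S v.
Proof.
  unfold esup. destruct (excluded_middle_informative _) as [H|H]; [|discriminate].
  intros E; inversion E; subst. destruct (completeness S _ _) as [w Hw]; exact Hw.
Qed.

Lemma esup_bounded S b : (exists x, S x) -> (forall x, S x -> x <= b) ->
  exists v, esup S = Some v /\ is_lub S v /\ v <= b.
Proof.
  intros Hne Hb. unfold esup. destruct (excluded_middle_informative _) as [H|H].
  - destruct (completeness S _ _) as [w Hw]; simpl. exists w. repeat split; try apply Hw; auto.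
  - exfalso. apply H. split; auto. exists b. intros x Hx; auto.
Qed.

Lemma esum_bounded {T} (f : T -> R) b : (forall x, 0 <= f x) ->
  (forall l, NoDup l -> fsum f l <= b) -> exists v, esum f = Some v /\ v <= b.
Proof.
  intros H0 Hb. unfold esum.
  destruct (esup_bounded (fun S => exists l, NoDup l /\ S = fsum f l) b) as [v [E [_ Hv]]].
  - exists 0, nil. split; [constructor|reflexivity].
  - intros x [l [Hl ->]]. auto.
  - exists v; auto.
Qed.

Lemma esum_ge_fsum {T} (f : T -> R) v : esum f = Some v -> forall l, NoDup l -> fsum f l <= v.
Proof. intros E l Hl. apply esup_lub in E. apply E. exists l; auto. Qed.

Lemma esum_ge_term {T} (f : T -> R) v : esum f = Some v -> forall t, f t <= v.
Proof.
  intros E t. pose proof (esum_ge_fsum f v E (t :: nil) (NoDup_cons _ (@in_nil _ t) (NoDup_nil _))).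
  simpl in H. lra.
Qed.

Lemma esum_ge0 {T} (f : T -> R) v : esum f = Some v -> 0 <= v.
Proof. intros E. pose proof (esum_ge_fsum f v E nil (NoDup_nil _)). simpl in H. lra. Qed.

Lemma esum_update {T} (f f' : T -> R) (pt : T) v : (forall x, 0 <= f x) -> (forall x, 0 <= f' x) ->
  (forall x, x <> pt -> f' x = f x) -> esum f = Some v -> exists v', esum f' = Some v'.
Proof.
  intros H0 H0' Hm E.
  destruct (esum_bounded f' (v + f' pt)) as [v' [E' _]]; eauto.
  intros l Hl. eapply Rle_trans; [apply (fsum_update_le f f' pt); auto|].
  pose proof (esum_ge_fsum f v E l Hl). lra.
Qed.

Lemma esum_le_enum {T} (g : T -> R) (e : nat -> T) b : (forall x, 0 <= g x) ->
  (forall x, g x <> 0 -> exists m, e m = x) ->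
  (forall n, fsum (fun m => g (e m)) (seq 0 n) <= b) ->
  exists v, esum g = Some v /\ v <= b.
Proof.
  intros H0 He Hb. apply esum_bounded; auto. intros l Hl.
  assert (Hcov : exists n, forall x, In x l -> g x <> 0 -> In x (map e (seq 0 n))).
  { clear Hl. induction l as [|x l [n Hn]].
    - exists 0%nat. intros x [].
    - destruct (classic (g x = 0)) as [Z|Z].
      + exists n. intros y [<-|Hy] Hy0; [contradiction|auto].
      + destruct (He x Z) as [m Hm]. exists (Nat.max n (S m)). intros y [<-|Hy] Hy0.
        * apply in_map_iff. exists m. split; auto. apply in_seq. lia.
        * specialize (Hn y Hy Hy0). apply in_map_iff in Hn. destruct Hn as [m' [Hm' Hin]].
          apply in_map_iff. exists m'. split; auto. apply in_seq in Hin. apply in_seq. lia. }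
  destruct Hcov as [n Hn]. eapply Rle_trans; [apply (fsum_incl g l (map e (seq 0 n))); auto|].
  rewrite fsum_map. apply Hb.
Qed.

Fixpoint zvec0 (d : nat) : Zvec d := match d with O => tt | S d' => (0%Z, zvec0 d') end.

Lemma Exp_cases (p : Exp) : (exists r, p = ExpF r) \/ p = ExpInf.
Proof. destruct p; eauto. Qed.

Definition crit_exp (d : nat) (s : R) (p : Exp) : R := - s + INR d * inv_exp p.

Section Sequence_space.

Variables (d N : nat) (s : R) (p q : Exp).
Hypotheses (Hp : Exp_pos p) (Hq : Exp_pos q).

Definition weight (j : nat) : R := Rpower 2 (- crit_exp d s p * INR j).

Definition wcoef (c : Coef d N) i j k : R := Cmod (c i j k) * weight j.

Lemma weight_pos j : 0 < weight j.
Proof. apply Rpower2_pos. Qed.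

Lemma wcoef_ge0 c i j k : 0 <= wcoef c i j k.
Proof. unfold wcoef. apply Rmult_le_pos; [apply Cmod_ge0|left; apply weight_pos]. Qed.

Lemma weight_ExpF r j : p = ExpF r -> Rpower 2 ((s - INR d / r) * INR j) = weight j.
Proof. intros E. unfold weight, crit_exp. rewrite E. simpl. f_equal. unfold Rdiv. ring. Qed.

Lemma weight_ExpInf j : p = ExpInf -> Rpower 2 (s * INR j) = weight j.
Proof. intros E. unfold weight, crit_exp. rewrite E. simpl. f_equal. ring. Qed.

Lemma wcoef_le_level c j v : level d N s p c j = Some v -> forall i k, wcoef c i j k <= v.
Proof.
  intros E i k. destruct p as [r|] eqn:Ep; simpl in Hp, E.
  - destruct (esum _) as [Sm|] eqn:ES; [|discriminate]. inversion E; subst v.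
    pose proof (esum_ge_term _ _ ES (i, k)) as H. simpl in H. rewrite (weight_ExpF r) in H by auto.
    apply (rpow_le_reg _ _ r); auto using wcoef_ge0, rpow_ge0.
    rewrite rpow_inv_rpow; auto. apply (esum_ge0 _ _ ES).
  - apply esup_lub in E. apply E. exists i, k. rewrite weight_ExpInf; auto.
Qed.

Lemma level_single c j i0 k0 :
  (forall i k, (i, k) <> (i0, k0) -> c i j k = C0) -> level d N s p c j = Some (wcoef c i0 j k0).
Proof.
  intros Hz.
  assert (Hw : forall i k, (i, k) <> (i0, k0) -> wcoef c i j k = 0).
  { intros i k H. unfold wcoef. rewrite Hz, Cmod_C0 by auto. ring. }
  destruct p as [r|] eqn:Ep; simpl in Hp |- *.
  - set (f := fun ik : Fin.t N * Zvec d => rpow (Cmod (c (fst ik) j (snd ik)) * Rpower 2 ((s - INR d / r) * INR j)) r).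
    assert (Hf : forall ik, f ik = rpow (wcoef c (fst ik) j (snd ik)) r).
    { intros ik. unfold f, wcoef. rewrite weight_ExpF; auto. }
    destruct (esum_bounded f (f (i0, k0))) as [v [Ev Hv]].
    { intros; apply rpow_ge0. }
    { intros l Hl. replace (f (i0, k0)) with (fsum f ((i0, k0) :: nil)) by (simpl; ring).
      apply fsum_incl; [intros; apply rpow_ge0|exact Hl|]. intros [i k] _ Hne. left.
      destruct (classic ((i0, k0) = (i, k))) as [|Hik]; auto. exfalso; apply Hne.
      rewrite Hf, Hw by auto. apply rpow_0. }
    fold f. rewrite Ev. pose proof (esum_ge_term _ _ Ev (i0, k0)).
    replace v with (f (i0, k0)) by lra. rewrite Hf. simpl. rewrite rpow_rpow_inv; auto using wcoef_ge0.
  - assert (Hle : forall x, (exists i k, x = Cmod (c i j k) * Rpower 2 (s * INR j)) -> x <= wcoef c i0 j k0).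
    { intros x [i [k ->]]. rewrite weight_ExpInf by auto. fold (wcoef c i j k).
      destruct (classic ((i, k) = (i0, k0))) as [E|E].
      - inversion E; subst; lra.
      - rewrite Hw by auto. apply wcoef_ge0. }
    destruct (esup_bounded _ (wcoef c i0 j k0) (ex_intro _ _ (ex_intro _ i0 (ex_intro _ k0 eq_refl))) Hle)
      as [v [Ev [Hl Hv]]].
    rewrite Ev. f_equal. apply Rle_antisym; auto. apply Hl. exists i0, k0. rewrite weight_ExpInf; auto.
Qed.

Lemma levval_of_level c j v : level d N s p c j = Some v -> levval d N s p c j = v.
Proof. intros E. unfold levval. rewrite E. reflexivity. Qed.

Lemma level_ext c c' j : (forall i k, c' i j k = c i j k) -> level d N s p c' j = level d N s p c j.
Proof.
  intros H. change (level d N s p c' j = level d N s p (fun i _ k => c i j k) j).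
  replace (fun i (_ : nat) k => c i j k) with (fun i (_ : nat) k => c' i j k); [reflexivity|].
  apply functional_extensionality; intros i. apply functional_extensionality; intros _.
  apply functional_extensionality; intros k. auto.
Qed.

Lemma bnorm_unfold c : (forall j, level d N s p c j <> None) ->
  bnorm d N s p q c = match q with
      | ExpF r =>
          match esum (fun j : nat => rpow (levval d N s p c j) r) with
          | Some v => Some (rpow v (/ r))
          | None => None
          end
      | ExpInf => esup (fun v => exists j, v = levval d N s p c j)
      end.
Proof. intros H. unfold bnorm. destruct (excluded_middle_informative _); [reflexivity|contradiction]. Qed.

Lemma bnorm_levels_finite c B : bnorm d N s p q c = Some B -> forall j, level d N s p c j <> None.
Proof. unfold bnorm. destruct (excluded_middle_informative _) as [H|_]; [auto|discriminate]. Qed.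

Lemma level_le_bnorm c B : bnorm d N s p q c = Some B ->
  forall j, exists v, level d N s p c j = Some v /\ v <= B.
Proof.
  intros E j. pose proof (bnorm_levels_finite c B E) as HL.
  destruct (level d N s p c j) as [v|] eqn:Ev; [|exfalso; apply (HL j); auto].
  exists v; split; auto. rewrite bnorm_unfold in E by auto.
  rewrite <- (levval_of_level c j v Ev).
  destruct q as [r|]; simpl in Hq.
  - destruct (esum _) as [Sm|] eqn:ES; [|discriminate]. inversion E; subst B.
    pose proof (esum_ge_term _ _ ES j) as H. simpl in H.
    destruct (Rle_dec 0 (levval d N s p c j)) as [H0|H0].
    + apply (rpow_le_reg _ _ r); auto using rpow_ge0. rewrite rpow_inv_rpow; auto. apply (esum_ge0 _ _ ES).
    + pose proof (rpow_ge0 Sm (/ r)). lra.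
  - apply esup_lub in E. apply E. exists j; auto.
Qed.

Lemma wcoef_le_bnorm c B : bnorm d N s p q c = Some B -> forall i j k, wcoef c i j k <= B.
Proof.
  intros E i j k. destruct (level_le_bnorm c B E j) as [v [Ev Hv]].
  pose proof (wcoef_le_level c j v Ev i k). lra.
Qed.

Lemma bnorm_ge0 c B : bnorm d N s p q c = Some B -> (exists i : Fin.t N, True) -> 0 <= B.
Proof.
  intros E [i _]. pose proof (wcoef_le_bnorm c B E i 0 (zvec0 d)). pose proof (wcoef_ge0 c i 0 (zvec0 d)). lra.
Qed.

Lemma bnorm_le_lq r c (v : nat -> R) (e : nat -> nat) b : q = ExpF r ->
  (forall j, level d N s p c j = Some (v j)) -> (forall j, 0 <= v j) ->
  (forall j, v j <> 0 -> exists m, e m = j) ->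
  (forall n, fsum (fun m => rpow (v (e m)) r) (seq 0 n) <= b) ->
  exists B, bnorm d N s p q c = Some B /\ B <= rpow b (/ r).
Proof.
  intros Er Hl Hv0 He Hb. rewrite Er in Hq. simpl in Hq.
  rewrite bnorm_unfold, Er by (intros j; rewrite Hl; discriminate).
  assert (Hlv : forall j, levval d N s p c j = v j) by (intros j; apply levval_of_level, Hl).
  destruct (esum_le_enum (fun j => rpow (levval d N s p c j) r) e b) as [w [Ew Hw]].
  - intros; apply rpow_ge0.
  - intros j Hj. apply He. rewrite Hlv in Hj. intros E; apply Hj; rewrite E; apply rpow_0.
  - intros n. eapply Rle_trans; [|apply (Hb n)]. right. apply fsum_ext_in. intros; rewrite Hlv; auto.
  - rewrite Ew. eexists; split; [reflexivity|]. apply rpow_le; [|apply Rinv_0_lt_compat; auto].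
    split; auto. apply (esum_ge0 _ _ Ew).
Qed.

Lemma bnorm_le_linf c (v : nat -> R) b : q = ExpInf ->
  (forall j, level d N s p c j = Some (v j)) -> (forall j, v j <= b) ->
  exists B, bnorm d N s p q c = Some B /\ B <= b.
Proof.
  intros Eq Hl Hb. rewrite bnorm_unfold, Eq by (intros j; rewrite Hl; discriminate).
  assert (Hlv : forall j, levval d N s p c j = v j) by (intros j; apply levval_of_level, Hl).
  destruct (esup_bounded (fun x => exists j, x = levval d N s p c j) b) as [B [EB [_ HB]]].
  - exists (levval d N s p c 0), 0%nat; auto.
  - intros x [j ->]. rewrite Hlv; auto.
  - exists B; auto.
Qed.

Lemma level_update c c' j0 i0 k0 v : level d N s p c j0 = Some v ->
  (forall i k, (i, k) <> (i0, k0) -> c' i j0 k = c i j0 k) -> exists v', level d N s p c' j0 = Some v'.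
Proof.
  intros Ev Hm. pose proof (wcoef_le_level c j0 v Ev) as Hpt.
  destruct p as [r|] eqn:Ep; simpl in Ev |- *.
  - destruct (esum _) as [S|] eqn:ES; [|discriminate].
    edestruct (esum_update
        (fun ik : Fin.t N * Zvec d => rpow (Cmod (c (fst ik) j0 (snd ik)) * Rpower 2 ((s - INR d / r) * INR j0)) r)
        (fun ik : Fin.t N * Zvec d =>
        rpow (Cmod (c' (fst ik) j0 (snd ik)) * Rpower 2 ((s - INR d / r) * INR j0)) r) (i0, k0) S)
      as [S' ES']; [intros; apply rpow_ge0|intros; apply rpow_ge0| |exact ES|].
    + intros [i k] Hik. simpl. rewrite Hm; auto.
    + rewrite ES'. eauto.
  - destruct (esup_bounded (fun v0 => exists i k, v0 = Cmod (c' i j0 k) * Rpower 2 (s * INR j0))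
      (Rmax v (wcoef c' i0 j0 k0))) as [w [Ew _]].
    + exists (Cmod (c' i0 j0 k0) * Rpower 2 (s * INR j0)), i0, k0; auto.
    + intros x [i [k ->]]. rewrite weight_ExpInf by auto. fold (wcoef c' i j0 k).
      destruct (classic ((i, k) = (i0, k0))) as [E|E].
      * inversion E; subst. apply Rmax_r.
      * unfold wcoef at 1. rewrite Hm by auto. eapply Rle_trans; [apply (Hpt i k)|apply Rmax_l].
    + rewrite Ew; eauto.
Qed.

Lemma in_b_update c c' i0 j0 k0 : in_b d N s p q c ->
  (forall i j k, (i, j, k) <> (i0, j0, k0) -> c' i j k = c i j k) -> in_b d N s p q c'.
Proof.
  intros [B EB] Hm.
  assert (Hlj : forall j, j <> j0 -> level d N s p c' j = level d N s p c j).
  { intros j Hj. apply level_ext. intros i k. apply Hm. intros E; inversion E; auto. }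
  assert (Hvv : forall j, j <> j0 -> levval d N s p c' j = levval d N s p c j).
  { intros j Hj. unfold levval. rewrite Hlj; auto. }
  destruct (level_le_bnorm c B EB j0) as [v [Ev _]].
  destruct (level_update c c' j0 i0 k0 v Ev) as [v0 Ev0].
  { intros i k Hik. apply Hm. intros E; inversion E; subst; auto. }
  assert (HL : forall j, level d N s p c' j <> None).
  { intros j. destruct (Nat.eq_dec j j0) as [->|Hj]; [rewrite Ev0; discriminate|].
    rewrite Hlj by auto. apply (bnorm_levels_finite c B EB). }
  rewrite bnorm_unfold in EB by apply (bnorm_levels_finite c B EB).
  unfold in_b. rewrite bnorm_unfold by auto.
  destruct q as [r|]; simpl in Hq.
  - destruct (esum (fun j => rpow (levval d N s p c j) r)) as [S|] eqn:ES; [|discriminate].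
    edestruct (esum_update (fun j => rpow (levval d N s p c j) r) (fun j => rpow (levval d N s p c' j) r) j0 S)
      as [S' ES'];
      [intros; apply rpow_ge0|intros; apply rpow_ge0| |exact ES|].
    + intros j Hj. rewrite Hvv; auto.
    + rewrite ES'. eauto.
  - apply esup_lub in EB.
    destruct (esup_bounded (fun v => exists j, v = levval d N s p c' j) (Rmax B (levval d N s p c' j0)))
      as [w [Ew _]].
    + exists (levval d N s p c' 0); eauto.
    + intros x [j ->]. destruct (Nat.eq_dec j j0) as [->|Hj]; [apply Rmax_r|].
      rewrite Hvv by auto. assert (levval d N s p c j <= B) by (apply EB; eauto).
      eapply Rle_trans; [apply H|apply Rmax_l].
    + rewrite Ew; eauto.
Qed.

Lemma bnorm_single_le c i j k :
  (forall i' j' k', (i', j', k') <> (i, j, k) -> c i' j' k' = C0) ->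
  exists B, bnorm d N s p q c = Some B /\ B <= wcoef c i j k.
Proof.
  intros Hz.
  assert (Hl : forall j', level d N s p c j' = Some (wcoef c i j' k)).
  { intros j'. apply level_single. intros i' k' Hne. apply Hz. intros E; inversion E; subst; auto. }
  assert (H0 : forall j', j' <> j -> wcoef c i j' k = 0).
  { intros j' Hj. unfold wcoef. rewrite Hz, Cmod_C0 by (intros E; inversion E; auto). ring. }
  destruct (Exp_cases q) as [[r Er]|Eq].
  - destruct (bnorm_le_lq r c (fun j' => wcoef c i j' k) (fun m => (j + m)%nat)
      (rpow (wcoef c i j k) r)) as [B [EB HB]]; auto using wcoef_ge0.
    + intros j' Hj'. exists (j' - j)%nat. destruct (Nat.eq_dec j' j) as [->|]; [lia|].
      exfalso; apply Hj'; auto.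
    + intros n. eapply Rle_trans; [apply (fsum_incl _ (seq 0 n) (0%nat :: nil))|].
      * intros; apply rpow_ge0.
      * apply seq_NoDup.
      * intros x _ Hx. destruct x; [left; auto|]. exfalso; apply Hx. rewrite H0 by lia. apply rpow_0.
      * simpl. rewrite Nat.add_0_r. lra.
    + rewrite Er in Hq. exists B. split; auto. rewrite rpow_rpow_inv in HB; auto using wcoef_ge0.
  - apply (bnorm_le_linf c (fun j' => wcoef c i j' k)); auto.
    intros j'. destruct (Nat.eq_dec j' j) as [->|Hne]; [lra|]. rewrite H0 by auto. apply wcoef_ge0.
Qed.

Definition index : Type := (Fin.t N * nat * Zvec d)%type.
Definition cidx (c : Coef d N) (t : index) : Cpx := c (fst (fst t)) (snd (fst t)) (snd t).
Definition scale_of (t : index) : nat := snd (fst t).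

Definition geom_const : R :=
  match q with ExpF r => rpow (/ (1 - Rpower 2 (- r))) (/ r) | ExpInf => 1 end.

Lemma geom_const_ge0 : 0 <= geom_const.
Proof. unfold geom_const. destruct (Exp_cases q) as [[r E]|E]; rewrite E; [apply rpow_ge0|lra]. Qed.

Section Embedding.

(** [lev m] are the target cubes, at pairwise distinct scales; the coefficient
    of index [sig m] is moved to cube [lev m], renormalised and damped by [2^{-m}]. *)
Variables lev sig : nat -> index.
Hypothesis lev_inj : forall m m', scale_of (lev m) = scale_of (lev m') -> m = m'.

Definition transfer (m : nat) : R :=
  weight (scale_of (sig m)) * Rpower 2 (- INR m) / weight (scale_of (lev m)).

Definition embed (c : Coef d N) : Coef d N :=
  fun i j k => match excluded_middle_informative (exists m, lev m = (i, j, k)) with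
  | left H => let m := proj1_sig (constructive_indefinite_description _ H) in
              Cmul (cidx c (sig m)) (transfer m, 0)
  | right _ => C0 end.

Lemma transfer_pos m : 0 < transfer m.
Proof.
  unfold transfer, Rdiv. pose proof (weight_pos (scale_of (sig m))). pose proof (weight_pos (scale_of (lev m))).
  pose proof (Rpower2_pos (- INR m)).
  apply Rmult_lt_0_compat; [nra|apply Rinv_0_lt_compat; auto].
Qed.

Lemma embed_at c m : cidx (embed c) (lev m) = Cmul (cidx c (sig m)) (transfer m, 0).
Proof.
  unfold cidx at 1, embed. destruct (lev m) as [[i j] k] eqn:El. simpl.
  destruct (excluded_middle_informative _) as [H|H].
  - destruct (constructive_indefinite_description _ H) as [m' Hm']; simpl.
    assert (m' = m) as -> by (apply lev_inj; rewrite Hm', El; reflexivity). reflexivity.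
  - exfalso; apply H; eauto.
Qed.

Lemma embed_off c i j k : (forall m, lev m <> (i, j, k)) -> embed c i j k = C0.
Proof.
  intros H. unfold embed.
  destruct (excluded_middle_informative _) as [[m Hm]|_]; [exfalso; eapply H; eauto|reflexivity].
Qed.

Lemma wcoef_embed_at c m :
  wcoef (embed c) (fst (fst (lev m))) (scale_of (lev m)) (snd (lev m)) =
  wcoef c (fst (fst (sig m))) (scale_of (sig m)) (snd (sig m)) * Rpower 2 (- INR m).
Proof.
  unfold wcoef. pose proof (embed_at c m) as E. unfold cidx, scale_of in *.
  rewrite E, Cmod_mul_real by (left; apply transfer_pos). unfold transfer, scale_of.
  field. apply Rgt_not_eq, weight_pos.
Qed.

Lemma level_embed_at c m :
  level d N s p (embed c) (scale_of (lev m)) =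
  Some (wcoef c (fst (fst (sig m))) (scale_of (sig m)) (snd (sig m)) * Rpower 2 (- INR m)).
Proof.
  rewrite <- wcoef_embed_at. apply level_single. intros i k Hne.
  apply embed_off. intros m' Hm'. assert (m' = m) as ->.
  { apply lev_inj. rewrite Hm'. reflexivity. }
  apply Hne. destruct (lev m) as [[a b] e]; inversion Hm'; reflexivity.
Qed.

Lemma level_embed_off c j (i0 : Fin.t N) : (forall m, scale_of (lev m) <> j) ->
  level d N s p (embed c) j = Some 0.
Proof.
  intros Hj. assert (Hz : forall i k, embed c i j k = C0).
  { intros i k. apply embed_off. intros m Hm. apply (Hj m). rewrite Hm. reflexivity. }
  rewrite (level_single (embed c) j i0 (zvec0 d)) by auto.
  unfold wcoef. rewrite Hz, Cmod_C0. f_equal. ring.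
Qed.

(** Thanks to the damping [2^{-m}], [embed] is bounded from the sup norm of the
    normalised coefficients to [b^{s,q}_p]. *)
Lemma embed_bnorm_le c M (i0 : Fin.t N) : 0 <= M -> (forall i j k, wcoef c i j k <= M) ->
  exists B, bnorm d N s p q (embed c) = Some B /\ B <= M * geom_const.
Proof.
  intros HM Hc.
  set (v := fun j => levval d N s p (embed c) j).
  assert (Hdamp : forall m, 0 < Rpower 2 (- INR m) <= 1).
  { intros m. split; [apply Rpower2_pos|]. rewrite <- (Rpower_O 2) by lra.
    apply Rle_Rpower; [lra|]. pose proof (pos_INR m); lra. }
  assert (Hvm : forall m, v (scale_of (lev m)) =
      wcoef c (fst (fst (sig m))) (scale_of (sig m)) (snd (sig m)) * Rpower 2 (- INR m)).
  { intros m. apply levval_of_level, level_embed_at. }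
  assert (Hl : forall j, level d N s p (embed c) j = Some (v j) /\ 0 <= v j /\ v j <= M /\
                 (v j <> 0 -> exists m, scale_of (lev m) = j)).
  { intros j. destruct (classic (exists m, scale_of (lev m) = j)) as [[m <-]|H].
    - rewrite Hvm, level_embed_at. pose proof (Hdamp m).
      pose proof (wcoef_ge0 c (fst (fst (sig m))) (scale_of (sig m)) (snd (sig m))).
      specialize (Hc (fst (fst (sig m))) (scale_of (sig m)) (snd (sig m))).
      repeat split; eauto; nra.
    - assert (E : level d N s p (embed c) j = Some 0).
      { apply level_embed_off; auto. intros m Hm; apply H; eauto. }
      unfold v. rewrite (levval_of_level _ _ _ E), E. repeat split; auto; try lra. }
  destruct (Exp_cases q) as [[r Er]|Eq].
  - pose proof Hq as Hr. rewrite Er in Hr. simpl in Hr.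
    set (a := Rpower 2 (- r)).
    assert (Ha : 0 < a < 1).
    { split; [apply Rpower2_pos|]. unfold a. rewrite <- (Rpower_O 2) by lra.
      unfold Rpower. apply exp_increasing. assert (0 < ln 2) by (pose proof ln_lt_2; lra). nra. }
    destruct (bnorm_le_lq r (embed c) v (fun m => scale_of (lev m)) (rpow M r * / (1 - a)))
      as [B [EB HB]]; auto; try apply Hl.
    + intros n. eapply Rle_trans.
      * apply (fsum_le _ (fun m => rpow M r * a ^ m)). intros m _. rewrite Hvm.
        pose proof (Hdamp m).
        pose proof (wcoef_ge0 c (fst (fst (sig m))) (scale_of (sig m)) (snd (sig m))).
        eapply Rle_trans; [apply rpow_le; auto; split; [nra|]|].
        { apply Rmult_le_compat_r; [lra|]. apply Hc. }
        rewrite rpow_mul by lra. right. f_equal. rewrite rpow_pos by lra. unfold a.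
        rewrite Rpower_mult, <- Rpower_pow by apply Rpower2_pos.
        rewrite Rpower_mult. f_equal. ring.
      * rewrite fsum_scal. apply Rmult_le_compat_l; [apply rpow_ge0|]. apply geom_sum_le. lra.
    + exists B. split; auto. eapply Rle_trans; [exact HB|]. right. unfold geom_const. rewrite Er.
      rewrite rpow_mul, rpow_rpow_inv; auto using rpow_ge0. left; apply Rinv_0_lt_compat; lra.
  - destruct (bnorm_le_linf (embed c) v M Eq) as [B [EB HB]]; try apply Hl.
    exists B; split; auto. unfold geom_const. rewrite Eq. lra.
Qed.

End Embedding.

End Sequence_space.

Ltac coef_ext := apply functional_extensionality; intros ?i;
  apply functional_extensionality; intros ?j; apply functional_extensionality; intros ?k.

Section Coefficient_algebra.

Variables d N : nat.

Notation lc := (lin_comb (czero d N) (cadd d N) (cscal d N)).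
Notation lin_indep_coef := (lin_indep (czero d N) (cadd d N) (cscal d N)).

Lemma csub_eq0 (a b : Coef d N) : csub d N a b = czero d N -> a = b.
Proof.
  intros H. coef_ext. assert (E := f_equal (fun f => f i j k) H). simpl in E. unfold csub, czero in E.
  destruct (a i j k), (b i j k). unfold Cadd, Copp, C0 in E. inversion E. f_equal; lra.
Qed.

Lemma cadd_cscal0 (X Y : Coef d N) : cadd d N X (cscal d N C0 Y) = X.
Proof.
  coef_ext. unfold cadd, cscal. destruct (X i j k), (Y i j k). unfold Cadd, Cmul, C0; cbn [fst snd]; f_equal; ring.
Qed.

Lemma lin_comb_app (l1 l2 : list (Cpx * Coef d N)) : lc (l1 ++ l2) = cadd d N (lc l1) (lc l2).
Proof.
  induction l1 as [|ax l1 IH]; simpl.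
  - coef_ext. unfold cadd, czero. destruct (lin_comb _ _ _ l2 i j k). unfold Cadd, C0; simpl; f_equal; ring.
  - rewrite IH. coef_ext. unfold cadd.
    destruct (cscal d N (fst ax) (snd ax) i j k), (lin_comb _ _ _ l1 i j k), (lin_comb _ _ _ l2 i j k).
    unfold Cadd; simpl; f_equal; ring.
Qed.

Lemma lin_comb_cons_middle l1 a w l2 : lc (l1 ++ (a, w) :: l2) = cadd d N (lc (l1 ++ l2)) (cscal d N a w).
Proof.
  rewrite !lin_comb_app. change (lc ((a, w) :: l2)) with (cadd d N (cscal d N a w) (lc l2)).
  coef_ext. unfold cadd, cscal. destruct (lin_comb _ _ _ l1 i j k), (lin_comb _ _ _ l2 i j k), (Cmul a (w i j k)).
  unfold Cadd; cbn [fst snd]; f_equal; ring.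
Qed.

Lemma lin_comb_scal z (l : list (Cpx * Coef d N)) :
  lc (map (fun ax => (Cmul z (fst ax), snd ax)) l) = cscal d N z (lc l).
Proof.
  induction l as [|ax l IH]; simpl.
  - coef_ext. unfold cscal, czero. destruct z. unfold Cmul, C0; simpl; f_equal; ring.
  - rewrite IH. coef_ext. unfold cadd, cscal. destruct z, (fst ax), (snd ax i j k), (lin_comb _ _ _ l i j k).
    unfold Cadd, Cmul; simpl; f_equal; ring.
Qed.

Lemma lin_comb_single (b : Coef d N) : lc (((1, 0), b) :: nil) = b.
Proof. simpl. coef_ext. unfold cadd, cscal, czero. destruct (b i j k). unfold Cadd, Cmul, C0; simpl; f_equal; ring. Qed.

Lemma lin_indep_add (A : Coef d N -> Prop) w : lin_indep_coef A ->
  (forall l, (forall ax, In ax l -> A (snd ax)) -> w <> lc l) ->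
  lin_indep_coef (fun x => A x \/ x = w).
Proof.
  intros HA Hw l Hnd Hin Hz.
  destruct (classic (In w (map snd l))) as [Hwin|Hwn].
  2: { apply (HA l); auto. intros ax Hx. destruct (Hin ax Hx) as [H|H]; auto.
       exfalso; apply Hwn. rewrite <- H. apply in_map; auto. }
  apply in_map_iff in Hwin. destruct Hwin as [[a w'] [Ew Hax]]. simpl in Ew; subst w'.
  destruct (in_split _ _ Hax) as [l1 [l2 ->]].
  rewrite map_app in Hnd. simpl in Hnd. apply NoDup_remove in Hnd. destruct Hnd as [Hnd Hnw].
  assert (Hrest : forall ax, In ax (l1 ++ l2) -> A (snd ax)).
  { intros ax Hx. destruct (Hin ax) as [H|H]; auto.
    - apply in_or_app. apply in_app_or in Hx. destruct Hx; [left|right; right]; auto.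
    - exfalso. apply Hnw. rewrite <- map_app, <- H. apply in_map; auto. }
  rewrite lin_comb_cons_middle in Hz.
  assert (Ha : a = C0).
  { apply NNPP. intros Hne.
    apply (Hw (map (fun ax => (Cmul (Copp (Cinv a)) (fst ax), snd ax)) (l1 ++ l2))).
    { intros ax Hx. apply in_map_iff in Hx. destruct Hx as [ay [<- Hy]]. simpl. auto. }
    rewrite lin_comb_scal. coef_ext. apply Cadd_mul_eq0; auto.
    exact (f_equal (fun f => f i j k) Hz). }
  subst a. rewrite cadd_cscal0 in Hz.
  intros ax Hx. apply in_app_or in Hx. destruct Hx as [Hx|[<-|Hx]]; [| reflexivity |];
    apply (HA (l1 ++ l2)); rewrite ?map_app; auto; apply in_or_app; auto.
Qed.

Lemma hamel_basis_exists (E : Coef d N -> Prop) :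
  exists BE, hamel_basis (czero d N) (cadd d N) (cscal d N) BE E.
Proof.
  set (P := fun A : Coef d N -> Prop => (forall x, A x -> E x) /\ lin_indep_coef A).
  destruct (@classical_sets.Zorn_bigcup _ P) as [A [[HAE HAi] Hmax]].
  - intros F HF Htot. split.
    + intros x [X HX Hx]. apply (proj1 (HF X HX)); auto.
    + intros l Hnd Hin.
      assert (Hone : l = nil \/ exists X, F X /\ forall ax, In ax l -> X (snd ax)).
      { clear Hnd. induction l as [|ax l IH]; [left; auto|right].
        destruct (Hin ax (or_introl eq_refl)) as [X HX Hx].
        destruct IH as [->|[Y [HY HYl]]]; [intros ay Hy; apply Hin; right; auto| |].
        - exists X. split; auto. intros ay [<-|[]]; auto.
        - destruct (Htot X Y HX HY) as [S|S]; [exists Y|exists X]; split; auto; intros ay [<-|Hy]; auto. }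
      destruct Hone as [->|[X [HX HXl]]]; [intros _ ax []|].
      apply (proj2 (HF X HX)); auto.
  - exists A. split; [auto|split; auto].
    intros w Hw. apply NNPP. intros Hn.
    assert (Hw' : forall l, (forall ax, In ax l -> A (snd ax)) -> w <> lc l).
    { intros l Hl Ew. apply Hn. exists l; auto. }
    apply (Hmax (fun x => A x \/ x = w)).
    + split; [intros x Hx; left; auto|]. intros Hsub. pose proof (Hsub w (or_intror eq_refl)) as Hwa.
      apply (Hw' (((1, 0), w) :: nil)); [intros ax [<-|[]]; auto|]. rewrite lin_comb_single; auto.
    + split; [intros x [Hx| ->]; auto|]. apply lin_indep_add; auto.
Qed.

End Coefficient_algebra.

Section Embedding_linear.

Variables (d N : nat) (s : R) (p : Exp) (lev sig : nat -> index d N).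
Hypothesis lev_inj : forall m m', scale_of d N (lev m) = scale_of d N (lev m') -> m = m'.

Notation T := (embed d N s p lev sig).

Lemma embed_add a b : T (cadd d N a b) = cadd d N (T a) (T b).
Proof.
  coef_ext. unfold cadd, embed. destruct (excluded_middle_informative _).
  - unfold cidx, cadd. destruct (a _ _ _), (b _ _ _). unfold Cmul, Cadd; simpl. f_equal; ring.
  - unfold Cadd, C0; simpl; f_equal; ring.
Qed.

Lemma embed_scal z a : T (cscal d N z a) = cscal d N z (T a).
Proof.
  coef_ext. unfold cscal, embed. destruct (excluded_middle_informative _).
  - unfold cidx, cscal. destruct z, (a _ _ _). unfold Cmul; simpl. f_equal; ring.
  - destruct z. unfold Cmul, C0; simpl; f_equal; ring.
Qed.

Lemma embed_sub a b : T (csub d N a b) = csub d N (T a) (T b).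
Proof.
  coef_ext. unfold csub, embed. destruct (excluded_middle_informative _).
  - unfold cidx, csub. destruct (a _ _ _), (b _ _ _). unfold Cmul, Cadd, Copp; simpl. f_equal; ring.
  - unfold Cadd, Copp, C0; simpl; f_equal; ring.
Qed.

Lemma embed_zero : T (czero d N) = czero d N.
Proof.
  coef_ext. unfold embed. destruct (excluded_middle_informative _); [|reflexivity].
  unfold cidx, czero, Cmul, C0; simpl; f_equal; ring.
Qed.

Lemma embed_lin_comb (l : list (Cpx * Coef d N)) :
  T (lin_comb (czero d N) (cadd d N) (cscal d N) l) =
  lin_comb (czero d N) (cadd d N) (cscal d N) (map (fun ax => (fst ax, T (snd ax))) l).
Proof. induction l as [|ax l IH]; simpl; [apply embed_zero|]. rewrite embed_add, embed_scal, IH. reflexivity. Qed.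

Lemma embed_injective : (forall t, exists m, sig m = t) -> forall a b, T a = T b -> a = b.
Proof.
  intros Hsig a b E. apply csub_eq0.
  assert (Hz : T (csub d N a b) = czero d N).
  { rewrite embed_sub, E. coef_ext. apply Cadd_opp_r. }
  coef_ext. destruct (Hsig (i, j, k)) as [m Hm].
  pose proof (embed_at d N s p lev sig lev_inj (csub d N a b) m) as H.
  rewrite Hz, Hm in H. unfold cidx, czero in H. simpl in H.
  apply Cmod_eq0. apply (f_equal Cmod) in H. rewrite Cmod_C0, Cmod_mul_real in H by (left; apply transfer_pos).
  pose proof (transfer_pos d N s p lev sig m). destruct (Rmult_integral _ _ (eq_sym H)); auto. lra.
Qed.

End Embedding_linear.

Section Divergence.

Variables (d N : nat) (psi : Fin.t N -> Rvec d -> Cpx) (s : R) (p q : Exp) (x0 : Rvec d).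
Hypotheses (Hp : Exp_pos p) (Hq : Exp_pos q).
Variable Mp : R.
Hypothesis psi_le : forall i y, Cmod (psi i y) <= Mp.

Let gamma := crit_exp d s p.

Definition wcoef_at (c : Coef d N) i j k : R := Cmod (Cmul (c i j k) (wav d N psi i j k x0)).

Definition divergent (c : Coef d N) (g : R) : Prop :=
  exists K, 0 < K /\ forall n : nat, exists i j k, (n <= j)%nat /\ wcoef_at c i j k >= K * Rpower 2 (g * INR j).

Definition critical (c : Coef d N) : Prop := forall m : nat, divergent c (gamma - / INR (S m)).

Lemma div_set_le_crit c g : in_b d N s p q c -> div_set d N psi c x0 g -> g <= gamma.
Proof.
  intros [B EB] [K [HK [iseq [jseq [kseq [Hj Hge]]]]]].
  destruct (Rle_dec g gamma) as [|Hn]; auto. exfalso.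
  assert (HB : 0 <= B) by (apply (bnorm_ge0 d N s p q Hp Hq c B EB); exists (iseq 0%nat); auto).
  destruct (Rpower2_unbounded (g - gamma) (B * Mp / K)) as [J0 HJ0]; [lra|].
  destruct (Hj J0) as [n0 Hn0]. specialize (HJ0 _ (Hn0 n0 (le_n _))). specialize (Hge n0).
  set (j := jseq n0) in *. rewrite Cmod_mul in Hge. unfold wav in Hge.
  pose proof (wcoef_le_bnorm d N s p q Hp Hq c B EB (iseq n0) j (kseq n0)) as Hc.
  unfold wcoef, weight in Hc. change (crit_exp d s p) with gamma in Hc.
  pose proof (psi_le (iseq n0) (dil_sub d (2 ^ j) x0 (kseq n0))) as Hps.
  set (a := Cmod (c (iseq n0) j (kseq n0))) in *.
  set (b := Cmod (psi (iseq n0) (dil_sub d (2 ^ j) x0 (kseq n0)))) in *.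
  set (w := Rpower 2 (- gamma * INR j)) in *.
  assert (0 <= a) by apply Cmod_ge0. assert (0 <= b) by apply Cmod_ge0.
  assert (Hw : w * Rpower 2 (g * INR j) = Rpower 2 ((g - gamma) * INR j)).
  { unfold w. rewrite <- Rpower_plus. f_equal. ring. }
  assert (Hwp : 0 < w) by apply Rpower2_pos.
  (* [K 2^{(g - gamma) j} <= (a w) b <= B Mp], contradicting the choice of [J0]. *)
  assert (K * Rpower 2 ((g - gamma) * INR j) <= B * Mp).
  { rewrite <- Hw. assert (a * w * b <= B * Mp) by (apply Rmult_le_compat; nra).
    assert (K * Rpower 2 (g * INR j) * w <= a * b * w) by (apply Rmult_le_compat_r; lra). nra. }
  assert (B * Mp / K * K = B * Mp) by (field; lra). nra.
Qed.

Lemma divergent_div_set c g : divergent c g -> div_set d N psi c x0 g.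
Proof.
  intros [K [HK Hn]].
  assert (Hs : forall n, {t : index d N | (n <= scale_of d N t)%nat /\
       wcoef_at c (fst (fst t)) (scale_of d N t) (snd t) >= K * Rpower 2 (g * INR (scale_of d N t))}).
  { intros n. apply constructive_indefinite_description. destruct (Hn n) as [i [j [k H]]]. exists (i, j, k); exact H. }
  exists K. split; auto.
  exists (fun n => fst (fst (proj1_sig (Hs n)))), (fun n => scale_of d N (proj1_sig (Hs n))),
    (fun n => snd (proj1_sig (Hs n))). split.
  - intros M. exists M. intros n Hn2. pose proof (proj1 (proj2_sig (Hs n))). lia.
  - intros n. exact (proj2 (proj2_sig (Hs n))).
Qed.

Lemma critical_is_lub c : in_b d N s p q c -> critical c -> is_lub (div_set d N psi c x0) gamma.
Proof.
  intros Hc HP. split.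
  - intros g Hg. eapply div_set_le_crit; eauto.
  - intros b Hb. destruct (Rle_dec gamma b) as [|Hn]; auto. exfalso.
    destruct (inv_INR_S_lt (gamma - b)) as [m Hm]; [lra|].
    assert (gamma - / INR (S m) <= b); [|lra].
    apply Hb, divergent_div_set, HP.
Qed.

Lemma divergent_mono c g g' : g' <= g -> divergent c g -> divergent c g'.
Proof.
  intros Hg [K [HK H]]. exists K. split; auto. intros n. destruct (H n) as [i [j [k [Hj Hge]]]].
  exists i, j, k. split; auto. eapply Rge_trans; [exact Hge|]. apply Rle_ge, Rmult_le_compat_l; [lra|].
  apply Rle_Rpower; [lra|]. apply Rmult_le_compat_r; [apply pos_INR|lra].
Qed.

Lemma divergent_csub a b g : divergent (csub d N a b) g -> divergent a g \/ divergent b g.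
Proof.
  intros [K [HK H]]. apply NNPP. intros Hn. apply not_or_and in Hn. destruct Hn as [Ha Hb].
  assert (Small : forall c, ~ divergent c g -> exists n1, forall i j k, (n1 <= j)%nat ->
      wcoef_at c i j k < K / 2 * Rpower 2 (g * INR j)).
  { intros c Hc. apply NNPP. intros H1. apply Hc. exists (K / 2). split; [lra|]. intros n.
    apply NNPP. intros H2. apply H1. exists n. intros i j k Hj. apply Rnot_ge_lt. intros H3. apply H2. eauto. }
  destruct (Small a Ha) as [n1 Fa], (Small b Hb) as [n2 Fb].
  destruct (H (Nat.max n1 n2)) as [i [j [k [Hj Hge]]]].
  specialize (Fa i j k ltac:(lia)). specialize (Fb i j k ltac:(lia)). unfold wcoef_at in *.
  set (w := wav d N psi i j k x0) in *.
  assert (E : Cmul (csub d N a b i j k) w = Cadd (Cmul (a i j k) w) (Copp (Cmul (b i j k) w))).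
  { unfold csub. destruct (a i j k), (b i j k), w. unfold Cmul, Cadd, Copp; cbn [fst snd]; f_equal; ring. }
  rewrite E in Hge. pose proof (Cmod_add (Cmul (a i j k) w) (Copp (Cmul (b i j k) w))).
  rewrite Cmod_opp in H0. lra.
Qed.

Lemma not_critical_csub a b : ~ critical a -> ~ critical b -> ~ critical (csub d N a b).
Proof.
  intros Ha Hb H. apply not_all_ex_not in Ha. apply not_all_ex_not in Hb. destruct Ha as [m1 Ha], Hb as [m2 Hb].
  assert (Hmono : forall m, (m <= Nat.max m1 m2)%nat -> forall c, divergent c (gamma - / INR (S (Nat.max m1 m2))) ->
            divergent c (gamma - / INR (S m))).
  { intros m Hm c. apply divergent_mono. pose proof (inv_INR_S_le m (Nat.max m1 m2) Hm). lra. }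
  destruct (divergent_csub a b _ (H (Nat.max m1 m2))) as [H'|H'].
  - apply Ha, (Hmono m1); auto; lia.
  - apply Hb, (Hmono m2); auto; lia.
Qed.

End Divergence.

Fixpoint floor_vec (d : nat) : R -> Rvec d -> Zvec d :=
  match d return R -> Rvec d -> Zvec d with
  | O => fun _ _ => tt
  | S d' => fun a x => (Int_part (a * fst x), floor_vec d' a (snd x))
  end.

Lemma dil_sub_floor_in_cube d a x : in_unit_cube d (dil_sub d a x (floor_vec d a x)).
Proof.
  induction d as [|d IH]; simpl; auto. split; auto.
  pose proof (base_Int_part (a * fst x)). lra.
Qed.

(** [refine_index d j k k'] is [2^j k + k']: the cube [k'] of the unit cube
    rescaled into the cube [k] of scale [J] becomes a cube of scale [J + j]. *)
Fixpoint refine_index (d : nat) (j : nat) : Zvec d -> Zvec d -> Zvec d :=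
  match d return Zvec d -> Zvec d -> Zvec d with
  | O => fun _ _ => tt
  | S d' => fun k k' => ((2 ^ Z.of_nat j * fst k + fst k')%Z, refine_index d' j (snd k) (snd k'))
  end.

Lemma dil_sub_comp d j a x k k' :
  dil_sub d (2 ^ j) (dil_sub d a x k) k' = dil_sub d (2 ^ j * a) x (refine_index d j k k').
Proof.
  induction d as [|d IH]; simpl; auto. f_equal; auto.
  rewrite plus_IZR, mult_IZR, pow_IZR. simpl. ring.
Qed.

Lemma list_max_ge {T} (f : T -> nat) (l : list T) t : In t l -> (f t <= list_max (map f l))%nat.
Proof.
  intros H. assert (Hall := proj1 (list_max_le (map f l) (list_max (map f l))) (le_n _)).
  rewrite Forall_forall in Hall. apply Hall, in_map; auto.
Qed.

Lemma covering_scales d N (psi : Fin.t N -> Rvec d -> Cpx) x0 : dyadic_covering d N psi ->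
  exists C L, 0 < C /\ forall J : nat, exists i j k, (J < j <= J + L)%nat /\ Cmod (wav d N psi i j k x0) >= C.
Proof.
  intros [C [HC [l [Hl1 Hcov]]]].
  exists C, (list_max (map (fun t : Fin.t N * nat * Zvec d => snd (fst t)) l)). split; auto.
  intros J. destruct (Hcov _ (dil_sub_floor_in_cube d (2 ^ J) x0)) as [[[i jl] kl] [Hin Hge]]. simpl in *.
  exists i, (jl + J)%nat, (refine_index d jl (floor_vec d (2 ^ J) x0) kl). split.
  - pose proof (Hl1 _ Hin). pose proof (list_max_ge (fun t : Fin.t N * nat * Zvec d => snd (fst t)) l _ Hin).
    simpl in *. lia.
  - unfold wav in *. rewrite dil_sub_comp in Hge. rewrite pow_add. exact Hge.
Qed.

Definition good_cubes d N (psi : Fin.t N -> Rvec d -> Cpx) x0 (C : R) (lev : nat -> index d N) : Prop :=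
  (forall m m', scale_of d N (lev m) = scale_of d N (lev m') -> m = m') /\
  (forall m, (m * m <= scale_of d N (lev m))%nat) /\
  forall m, Cmod (wav d N psi (fst (fst (lev m))) (scale_of d N (lev m)) (snd (lev m)) x0) >= C.

Lemma good_cubes_exist d N (psi : Fin.t N -> Rvec d -> Cpx) x0 : dyadic_covering d N psi ->
  exists C lev, 0 < C /\ good_cubes d N psi x0 C lev.
Proof.
  intros Hcov. destruct (covering_scales d N psi x0 Hcov) as [C [L [HC H]]].
  (* Scales are taken in the disjoint windows [(m^2 (L+1), m^2 (L+1) + L]]. *)
  assert (Hs : forall m, {t : index d N | (m * m * (L + 1) < scale_of d N t <= m * m * (L + 1) + L)%nat /\
      Cmod (wav d N psi (fst (fst t)) (scale_of d N t) (snd t) x0) >= C}).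
  { intros m. apply constructive_indefinite_description. destruct (H (m * m * (L + 1))%nat) as [i [j [k Hk]]].
    exists (i, j, k). exact Hk. }
  exists C, (fun m => proj1_sig (Hs m)). split; auto. split; [|split].
  - intros m m' E. pose proof (proj1 (proj2_sig (Hs m))). pose proof (proj1 (proj2_sig (Hs m'))).
    rewrite E in H0. destruct (Nat.lt_trichotomy m m') as [Hl|[Hl|Hl]]; auto; exfalso.
    + assert (S m * S m <= m' * m')%nat by nia. nia.
    + assert (S m' * S m' <= m * m)%nat by nia. nia.
  - intros m. pose proof (proj1 (proj2_sig (Hs m))). nia.
  - intros m. exact (proj2 (proj2_sig (Hs m))).
Qed.

Definition visits_often {T} (sig : nat -> T) : Prop := forall t n, exists m, (n <= m)%nat /\ sig m = t.

Lemma visits_often_onto {T} (sig : nat -> T) : visits_often sig -> forall t, exists m, sig m = t.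
Proof. intros Hsig t. destruct (Hsig t 0%nat) as [m [_ Hm]]. eauto. Qed.

Lemma Fin_enum N (i0 : Fin.t N) : exists e : nat -> Fin.t N, forall i, exists n, e n = i.
Proof.
  exists (fun n => match lt_dec n N with left H => Fin.of_nat_lt H | right _ => i0 end).
  intros i. exists (proj1_sig (Fin.to_nat i)). destruct (lt_dec _ N) as [H|H].
  - rewrite (Fin.of_nat_ext H (proj2_sig (Fin.to_nat i))). apply Fin.of_nat_to_nat_inv.
  - exfalso; apply H; apply (proj2_sig (Fin.to_nat i)).
Qed.

Lemma Z_enum : exists e : nat -> Z, forall z, exists n, e n = z.
Proof.
  exists (fun n => (Z.of_nat (fst (Cantor.of_nat n)) - Z.of_nat (snd (Cantor.of_nat n)))%Z).
  intros z. destruct (Z.le_gt_cases 0 z).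
  - exists (Cantor.to_nat (Z.to_nat z, 0%nat)). rewrite Cantor.cancel_of_to. simpl. lia.
  - exists (Cantor.to_nat (0%nat, Z.to_nat (- z))). rewrite Cantor.cancel_of_to. simpl. lia.
Qed.

Lemma Zvec_enum d : exists e : nat -> Zvec d, forall z, exists n, e n = z.
Proof.
  induction d as [|d [e He]].
  - exists (fun _ => tt). intros []. exists 0%nat; reflexivity.
  - destruct Z_enum as [ez Hez].
    exists (fun n => (ez (fst (Cantor.of_nat n)), e (snd (Cantor.of_nat n)))).
    intros [z v]. destruct (Hez z) as [a Ha]. destruct (He v) as [b Hb].
    exists (Cantor.to_nat (a, b)). rewrite Cantor.cancel_of_to. simpl. rewrite Ha, Hb; reflexivity.
Qed.

Lemma index_visits_often d N (i0 : Fin.t N) : exists sig : nat -> index d N, visits_often sig.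
Proof.
  destruct (Fin_enum N i0) as [ef Hef]. destruct (Zvec_enum d) as [ez Hez].
  set (e := fun n => (ef (fst (Cantor.of_nat n)), fst (Cantor.of_nat (snd (Cantor.of_nat n))),
                      ez (snd (Cantor.of_nat (snd (Cantor.of_nat n)))))).
  assert (He : forall t, exists a, e a = t).
  { intros [[i j] k]. destruct (Hef i) as [a Ha]. destruct (Hez k) as [b Hb].
    exists (Cantor.to_nat (a, Cantor.to_nat (j, b))). unfold e.
    rewrite !Cantor.cancel_of_to. cbn [fst snd]. rewrite Cantor.cancel_of_to. cbn [fst snd].
    rewrite Ha, Hb. reflexivity. }
  (* [m = <a, n>] runs through all [a] again and again, with [m >= n]. *)
  exists (fun m => e (fst (Cantor.of_nat m))). intros t n. destruct (He t) as [a Ha].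
  exists (Cantor.to_nat (a, n)). rewrite Cantor.cancel_of_to. simpl. split; auto.
  pose proof (Cantor.to_nat_non_decreasing a n). lia.
Qed.

Section Critical_embedding.

Variables (d N : nat) (psi : Fin.t N -> Rvec d -> Cpx) (s : R) (p : Exp) (x0 : Rvec d).
Variables (C : R) (lev sig : nat -> index d N).
Hypotheses (HC : 0 < C) (Hlev : good_cubes d N psi x0 C lev) (Hsig : visits_often sig).

Notation T := (embed d N s p lev sig).

(** The damping [2^{-m}] is at most [2^{-j_m/(m'+1)}] once [m > m'], because [j_m >= m^2]. *)
Lemma transfer_ge m m' : (S m' <= m)%nat ->
  transfer d N s p lev sig m >=
  weight d s p (scale_of d N (sig m)) * Rpower 2 ((crit_exp d s p - / INR (S m')) * INR (scale_of d N (lev m))).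
Proof.
  intros Hm. destruct Hlev as [_ [Hsq _]]. specialize (Hsq m).
  set (j := scale_of d N (lev m)) in *.
  unfold transfer, Rdiv. fold j. rewrite Rmult_assoc. apply Rle_ge, Rmult_le_compat_l; [left; apply weight_pos|].
  unfold weight. rewrite <- Rpower_Ropp, <- Rpower_plus. apply Rle_Rpower; [lra|].
  assert (HmR : INR (S m') <= INR m) by (apply le_INR; lia).
  assert (Hj : INR m * INR m <= INR j) by (rewrite <- mult_INR; apply le_INR; lia).
  assert (0 < INR (S m')) by (apply lt_0_INR; lia).
  assert (INR m <= / INR (S m') * INR j).
  { apply (Rmult_le_reg_l (INR (S m'))); auto. rewrite <- Rmult_assoc, Rinv_r by lra. nra. }
  lra.
Qed.

Lemma embed_critical c t0 : cidx d N c t0 <> C0 -> critical d N psi s p x0 (T c).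
Proof.
  intros Hc m'. pose proof Hlev as [Hinj [Hsq Hpsi]].
  pose proof (Cmod_gt0 _ Hc) as Hcm. pose proof (weight_pos d s p (scale_of d N t0)).
  exists (Cmod (cidx d N c t0) * weight d s p (scale_of d N t0) * C). split; [apply Rmult_lt_0_compat; nra|].
  intros n. destruct (Hsig t0 (Nat.max n (S m'))) as [m [Hm Hsm]].
  exists (fst (fst (lev m))), (scale_of d N (lev m)), (snd (lev m)).
  split; [specialize (Hsq m); nia|].
  unfold wcoef_at. pose proof (embed_at d N s p lev sig Hinj c m) as E. unfold cidx at 1 in E.
  unfold scale_of at 1 2. rewrite E, Cmod_mul, Cmod_mul_real by (left; apply transfer_pos).
  pose proof (transfer_ge m m' ltac:(lia)) as Ht. rewrite Hsm in Ht |- *.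
  specialize (Hpsi m). unfold scale_of in Hpsi, Ht |- *.
  set (P := Cmod (wav d N psi (fst (fst (lev m))) (snd (fst (lev m))) (snd (lev m)) x0)) in *.
  set (w := weight d s p (snd (fst t0))) in *.
  set (Rp := Rpower 2 ((crit_exp d s p - / INR (S m')) * INR (snd (fst (lev m))))) in *.
  set (tr := transfer d N s p lev sig m) in *. set (Cm := Cmod (cidx d N c t0)) in *.
  assert (0 < Rp) by apply Rpower2_pos.
  apply Rle_ge. apply Rle_trans with (Cm * tr * C).
  - assert (w * Rp * (Cm * C) <= tr * (Cm * C)) by (apply Rmult_le_compat_r; nra). lra.
  - apply Rmult_le_compat_l; [|lra]. left. apply Rmult_lt_0_compat; [lra|apply transfer_pos].
Qed.

End Critical_embedding.

(** Either [a] is already large against [w], or adding [b = 3 tau / |w|] makes it so. *)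
Lemma Cadd_bump a w tau : 0 < tau -> 0 < Cmod w ->
  exists b, Cmod (Cmul (Cadd a b) w) > tau /\ Cmod b * Cmod w <= 3 * tau.
Proof.
  intros Htau Hw. destruct (Rlt_dec tau (Cmod (Cmul a w))) as [Hlt|Hge].
  - exists C0. rewrite Cmod_C0. split; [|lra].
    replace (Cadd a C0) with a by (destruct a; unfold Cadd, C0; simpl; f_equal; ring). lra.
  - set (b := (3 * tau / Cmod w, 0)). exists b.
    assert (Hb : Cmod b = 3 * tau / Cmod w).
    { unfold b. rewrite Cmod_real, Rabs_pos_eq; auto. unfold Rdiv. apply Rmult_le_pos; [lra|].
      left; apply Rinv_0_lt_compat; lra. }
    assert (Hbw : Cmod b * Cmod w = 3 * tau) by (rewrite Hb; field; lra).
    assert (E : Cmul b w = Cadd (Cmul (Cadd a b) w) (Copp (Cmul a w))).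
    { destruct a, b, w; unfold Cmul, Cadd, Copp; simpl; f_equal; ring. }
    pose proof (Cmod_add (Cmul (Cadd a b) w) (Copp (Cmul a w))) as Ht.
    rewrite <- E, Cmod_opp, Cmod_mul in Ht. lra.
Qed.

Definition coef_update {d N} (c : Coef d N) (t : index d N) (v : Cpx) : Coef d N :=
  fun i j k => if excluded_middle_informative ((i, j, k) = t) then v else c i j k.

Lemma coef_update_off {d N} (c : Coef d N) t v i j k : (i, j, k) <> t -> coef_update c t v i j k = c i j k.
Proof. intros H. unfold coef_update. destruct (excluded_middle_informative _); [contradiction|auto]. Qed.

Lemma coef_update_at {d N} (c : Coef d N) i j k v : coef_update c (i, j, k) v i j k = v.
Proof. unfold coef_update. destruct (excluded_middle_informative _) as [_|n]; [auto|exfalso; apply n; auto]. Qed.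

Section Residuality.

Variables (d N : nat) (psi : Fin.t N -> Rvec d -> Cpx) (s : R) (p q : Exp) (x0 : Rvec d).
Hypotheses (Hp : Exp_pos p) (Hq : Exp_pos q).
Variable Mp : R.
Hypotheses (Mp_ge0 : 0 <= Mp) (psi_le : forall i y, Cmod (psi i y) <= Mp).

Let gamma := crit_exp d s p.

Definition big_coef_set (tau : nat -> R) (n : nat) (c : Coef d N) : Prop :=
  in_b d N s p q c /\ exists i j k, (n <= j)%nat /\ wcoef_at d N psi x0 c i j k > tau j.

Lemma big_coef_set_open tau n : openE (in_b d N s p q) (bnear d N s p q) (big_coef_set tau n).
Proof.
  split; [intros c [H _]; auto|].
  intros c [Hc [i [j [k [Hj Hgt]]]]]. unfold wcoef_at in *.
  set (a := Cmod (Cmul (c i j k) (wav d N psi i j k x0))) in *.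
  pose proof (weight_pos d s p j).
  exists ((a - tau j) * weight d s p j / (Mp + 1)). split.
  { unfold Rdiv. apply Rmult_lt_0_compat; [nra|apply Rinv_0_lt_compat; lra]. }
  intros y Hy [r [Er Hr]]. split; auto. exists i, j, k. split; auto. unfold wcoef_at.
  pose proof (wcoef_le_bnorm d N s p q Hp Hq (csub d N y c) r Er i j k) as Hcw. unfold wcoef, csub in Hcw.
  pose proof (Cmod_sub_ge (Cmul (c i j k) (wav d N psi i j k x0)) (Cmul (y i j k) (wav d N psi i j k x0))) as Ht.
  replace (Cadd (Cmul (c i j k) (wav d N psi i j k x0)) (Copp (Cmul (y i j k) (wav d N psi i j k x0))))
    with (Copp (Cmul (Cadd (y i j k) (Copp (c i j k))) (wav d N psi i j k x0))) in Ht
    by (destruct (c i j k), (y i j k), (wav d N psi i j k x0); unfold Cadd, Copp, Cmul; simpl; f_equal; ring).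
  rewrite Cmod_opp, (Cmod_mul (Cadd _ _)) in Ht. fold a in Ht.
  pose proof (psi_le i (dil_sub d (2 ^ j) x0 k)) as Hps. unfold wav in *.
  set (e := Cmod (Cadd (y i j k) (Copp (c i j k)))) in *.
  set (P := Cmod (psi i (dil_sub d (2 ^ j) x0 k))) in *.
  assert (0 <= e) by apply Cmod_ge0. assert (0 <= P) by apply Cmod_ge0.
  assert (e < (a - tau j) / (Mp + 1)).
  { apply (Rmult_lt_reg_r (weight d s p j)); auto. unfold Rdiv in *. lra. }
  assert (e * P <= (a - tau j) / (Mp + 1) * Mp) by (apply Rmult_le_compat; lra).
  assert ((a - tau j) / (Mp + 1) * Mp < a - tau j).
  { unfold Rdiv. assert (Mp * / (Mp + 1) < 1).
    { apply (Rmult_lt_reg_r (Mp + 1)); [lra|]. rewrite Rmult_assoc, Rinv_l by lra. lra. }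
    nra. }
  lra.
Qed.

Definition crit_threshold (n : nat) (j : nat) : R := Rpower 2 ((gamma - / INR (S n)) * INR j).

Variables (C : R) (lev : nat -> index d N).
Hypotheses (HC : 0 < C) (Hlev : good_cubes d N psi x0 C lev).

(** Bump the coefficient of a good cube of scale [j >= n]; the cost in norm is
    [O(2^{-j/(n+1)})], which is small for [j] large. *)
Lemma big_coef_set_dense n :
  denseE (in_b d N s p q) (bnear d N s p q) (big_coef_set (crit_threshold n) n).
Proof.
  intros x Hx eps Heps. destruct Hlev as [_ [Hsq Hpsi]].
  assert (Hdel : 0 < / INR (S n)) by (apply Rinv_0_lt_compat, lt_0_INR; lia).
  destruct (Rpower2_unbounded (/ INR (S n)) (3 / (C * eps)) Hdel) as [J0 HJ0].
  set (m := Nat.max n J0). specialize (Hsq m). specialize (Hpsi m).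
  destruct (lev m) as [[i j] k] eqn:El. unfold scale_of in Hsq, Hpsi. simpl in Hsq, Hpsi.
  set (ps := wav d N psi i j k x0) in *. set (tau := crit_threshold n j).
  assert (Htau : 0 < tau) by apply Rpower2_pos.
  destruct (Cadd_bump (x i j k) ps tau Htau) as [b [Hbig Hb]]; [lra|].
  set (y := coef_update x (i, j, k) (Cadd (x i j k) b)).
  assert (Hjm : (m <= j)%nat) by nia.
  exists y. split; [split|].
  - apply (in_b_update d N s p q Hp Hq x y i j k); auto. intros; apply coef_update_off; auto.
  - exists i, j, k. split; [lia|]. unfold wcoef_at, y. rewrite coef_update_at. exact Hbig.
  - set (z := csub d N y x).
    destruct (bnorm_single_le d N s p q Hp Hq z i j k) as [B [EB HB]].
    { intros i' j' k' H. unfold z, csub, y. rewrite coef_update_off by auto. apply Cadd_opp_r. }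
    exists B. split; auto. eapply Rle_lt_trans; [exact HB|].
    unfold wcoef, z, csub, y. rewrite coef_update_at.
    replace (Cadd (Cadd (x i j k) b) (Copp (x i j k))) with b
      by (destruct (x i j k), b; unfold Cadd, Copp; simpl; f_equal; ring).
    set (P := Rpower 2 (/ INR (S n) * INR j)).
    assert (Hwt : tau * weight d s p j = / P).
    { unfold tau, crit_threshold, weight, P, gamma. rewrite <- Rpower_plus, <- Rpower_Ropp. f_equal. ring. }
    assert (HA : 3 / (C * eps) < P) by (apply HJ0; lia).
    assert (HP : 0 < P) by apply Rpower2_pos.
    assert (Hsmall : 3 * / P < C * eps).
    { apply (Rmult_lt_reg_r P); auto. rewrite Rmult_assoc, Rinv_l by lra.
      apply (Rmult_lt_compat_l (C * eps)) in HA; [|nra].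
      replace (C * eps * (3 / (C * eps))) with 3 in HA by (field; lra). lra. }
    pose proof (weight_pos d s p j). pose proof (Cmod_ge0 b).
    assert (Cmod b * C <= 3 * tau) by (apply Rle_trans with (Cmod b * Cmod ps); [apply Rmult_le_compat_l|]; lra).
    assert (Cmod b * C * weight d s p j < C * eps)
      by (apply Rle_lt_trans with (3 * (tau * weight d s p j)); [|rewrite Hwt]; nra).
    nra.
Qed.

Lemma residual_critical :
  residual (in_b d N s p q) (bnear d N s p q)
    (fun c => in_b d N s p q c /\ is_lub (div_set d N psi c x0) gamma).
Proof.
  exists (fun n => big_coef_set (crit_threshold n) n). split.
  - intros n. split; [apply big_coef_set_open|apply big_coef_set_dense].
  - intros c Hc Hall. split; auto. apply (critical_is_lub d N psi s p q x0 Hp Hq Mp); auto.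
    intros m. exists 1. split; [lra|]. intros n.
    destruct (Hall (Nat.max n m)) as [_ [i [j [k [Hj Hgt]]]]]. exists i, j, k. split; [lia|].
    rewrite Rmult_1_l. left. eapply Rle_lt_trans; [|exact Hgt]. unfold crit_threshold.
    apply Rle_Rpower; [lra|]. apply Rmult_le_compat_r; [apply pos_INR|].
    pose proof (inv_INR_S_le m (Nat.max n m) ltac:(lia)). unfold gamma. lra.
Qed.

End Residuality.

Lemma NoDup_map_on {A B} (f : A -> B) (P : A -> Prop) l : (forall x, In x l -> P x) ->
  (forall x y, P x -> P y -> f x = f y -> x = y) -> NoDup l -> NoDup (map f l).
Proof.
  intros HP Hinj Hnd. induction Hnd as [|x l Hx Hnd IH]; simpl; constructor.
  - intros Hin. apply in_map_iff in Hin. destruct Hin as [y [Ey Hy]].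
    assert (y = x) by (apply Hinj; auto; apply HP; simpl; auto). subst; contradiction.
  - apply IH. intros; apply HP; simpl; auto.
Qed.

Section Embedded_basis.

Variables (d N : nat) (s : R) (p : Exp) (lev sig : nat -> index d N).
Hypotheses (lev_inj : forall m m', scale_of d N (lev m) = scale_of d N (lev m') -> m = m')
  (sig_onto : forall t, exists m, sig m = t).

Notation T := (embed d N s p lev sig).
Notation lc := (lin_comb (czero d N) (cadd d N) (cscal d N)).

Variable B : Coef d N -> Prop.

Definition embed_image (y : Coef d N) : Prop := exists b, B b /\ y = T b.

Definition embed_span (y : Coef d N) : Prop :=
  exists l, (forall ax, In ax l -> B (snd ax)) /\ y = T (lc l).

Definition embed_preimage (y : Coef d N) : Coef d N :=
  match excluded_middle_informative (exists b, B b /\ T b = y) with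
  | left H => proj1_sig (constructive_indefinite_description _ H)
  | right _ => y end.

Lemma embed_preimage_spec y : embed_image y -> B (embed_preimage y) /\ T (embed_preimage y) = y.
Proof.
  intros [b [Hb ->]]. unfold embed_preimage. destruct (excluded_middle_informative _) as [H|H].
  - exact (proj2_sig (constructive_indefinite_description _ H)).
  - exfalso; apply H; eauto.
Qed.

Lemma embed_image_lin_indep :
  lin_indep (czero d N) (cadd d N) (cscal d N) B -> lin_indep (czero d N) (cadd d N) (cscal d N) embed_image.
Proof.
  intros HB l Hnd Hin Hz.
  set (l' := map (fun ax => (fst ax, embed_preimage (snd ax))) l).
  assert (Hmap : map (fun ax => (fst ax, T (snd ax))) l' = l).
  { unfold l'. rewrite map_map. simpl. rewrite <- (map_id l) at 2. apply map_ext_in.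
    intros [a y] Hay. simpl. rewrite (proj2 (embed_preimage_spec y (Hin _ Hay))). reflexivity. }
  assert (Hl'0 : lc l' = czero d N).
  { apply (embed_injective d N s p lev sig lev_inj sig_onto).
    rewrite embed_lin_comb, Hmap, Hz, embed_zero. reflexivity. }
  assert (HBl : forall ax, In ax l' -> B (snd ax)).
  { intros ax Hx. unfold l' in Hx. apply in_map_iff in Hx. destruct Hx as [ay [<- Hy]].
    apply embed_preimage_spec; auto. }
  assert (Hnd' : NoDup (map snd l')).
  { unfold l'. rewrite map_map. simpl. rewrite <- (map_map snd embed_preimage).
    apply (NoDup_map_on embed_preimage embed_image); auto.
    - intros y Hy. apply in_map_iff in Hy. destruct Hy as [ay [<- Hy]]. auto.
    - intros y y' Hy Hy' E. rewrite <- (proj2 (embed_preimage_spec y Hy)), <- (proj2 (embed_preimage_spec y' Hy')), E.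
      reflexivity. }
  intros ax Hax. apply (HB l' Hnd' HBl Hl'0 (fst ax, embed_preimage (snd ax))).
  unfold l'. apply in_map_iff. exists ax; auto.
Qed.

Lemma embed_image_hamel_basis :
  lin_indep (czero d N) (cadd d N) (cscal d N) B ->
  hamel_basis (czero d N) (cadd d N) (cscal d N) embed_image embed_span.
Proof.
  intros HB. split; [|split].
  - intros y [b [Hb ->]]. exists (((1, 0), b) :: nil). split; [intros ax [<-|[]]; auto|].
    rewrite lin_comb_single; auto.
  - apply embed_image_lin_indep; auto.
  - intros w [l [Hl ->]]. exists (map (fun ax => (fst ax, T (snd ax))) l). split.
    + intros ax Hx. apply in_map_iff in Hx. destruct Hx as [ay [<- Hy]]. simpl. exists (snd ay); auto.
    + apply embed_lin_comb.
Qed.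

Lemma embed_image_same_card : same_card embed_image B.
Proof.
  exists embed_preimage. split; [|split].
  - intros y Hy; apply embed_preimage_spec; auto.
  - intros y y' Hy Hy' E. rewrite <- (proj2 (embed_preimage_spec y Hy)), <- (proj2 (embed_preimage_spec y' Hy')), E.
    reflexivity.
  - intros b Hb. exists (T b). assert (HTb : embed_image (T b)) by (exists b; auto). split; auto.
    apply (embed_injective d N s p lev sig lev_inj sig_onto). apply (proj2 (embed_preimage_spec _ HTb)).
Qed.

End Embedded_basis.

Lemma lin_comb_wcoef_bounded d N s p (l : list (Cpx * Coef d N)) :
  (forall ax, In ax l -> exists M, forall i j k, wcoef d N s p (snd ax) i j k <= M) ->
  exists M, 0 <= M /\ forall i j k, wcoef d N s p (lin_comb (czero d N) (cadd d N) (cscal d N) l) i j k <= M.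
Proof.
  induction l as [|[a x] l IH]; intros H.
  - exists 0. split; [lra|]. intros i j k. unfold wcoef. simpl. unfold czero. rewrite Cmod_C0. lra.
  - destruct IH as [M2 [HM2 H2]]; [intros ax Hx; apply H; right; auto|].
    destruct (H (a, x) (or_introl eq_refl)) as [M1 H1]. simpl in H1.
    pose proof (Cmod_ge0 a). pose proof (Rmax_l 0 M1).
    exists (Cmod a * Rmax 0 M1 + M2). split; [nra|].
    intros i j k. specialize (H1 i j k). specialize (H2 i j k). unfold wcoef in *. simpl.
    change (cadd d N (cscal d N a x) (lin_comb (czero d N) (cadd d N) (cscal d N) l) i j k)
      with (Cadd (Cmul a (x i j k)) (lin_comb (czero d N) (cadd d N) (cscal d N) l i j k)).
    pose proof (Cmod_add (Cmul a (x i j k)) (lin_comb (czero d N) (cadd d N) (cscal d N) l i j k)) as Htri.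
    rewrite Cmod_mul in Htri. pose proof (weight_pos d s p j). pose proof (Cmod_ge0 (x i j k)).
    assert (Cmod a * (Cmod (x i j k) * weight d s p j) <= Cmod a * Rmax 0 M1)
      by (apply Rmult_le_compat_l; [lra|]; eapply Rle_trans; [exact H1|apply Rmax_r]).
    nra.
Qed.

Section Lineability.

Variables (d N : nat) (psi : Fin.t N -> Rvec d -> Cpx) (s : R) (p q : Exp) (x0 : Rvec d).
Hypotheses (Hp : Exp_pos p) (Hq : Exp_pos q).
Variable Mp : R.
Hypothesis psi_le : forall i y, Cmod (psi i y) <= Mp.
Variables (C : R) (lev sig : nat -> index d N) (i0 : Fin.t N).
Hypotheses (HC : 0 < C) (Hlev : good_cubes d N psi x0 C lev) (Hsig : visits_often sig).

Notation T := (embed d N s p lev sig).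
Notation lc := (lin_comb (czero d N) (cadd d N) (cscal d N)).

Let lev_inj : forall m m', scale_of d N (lev m) = scale_of d N (lev m') -> m = m' := proj1 Hlev.
Let sig_onto : forall t, exists m, sig m = t := visits_often_onto sig Hsig.

Lemma embed_span_in_b BE l : (forall x, BE x -> in_b d N s p q x) ->
  (forall ax, In ax l -> BE (snd ax)) -> in_b d N s p q (T (lc l)).
Proof.
  intros HBE Hl. destruct (lin_comb_wcoef_bounded d N s p l) as [M [HM0 HMb]].
  - intros ax Hx. destruct (HBE _ (Hl ax Hx)) as [B EB]. exists B. apply (wcoef_le_bnorm d N s p q Hp Hq _ B EB).
  - destruct (embed_bnorm_le d N s p q Hp Hq lev sig lev_inj (lc l) M i0 HM0 HMb) as [B [EB _]]. exists B; exact EB.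
Qed.

Lemma embed_span_subspace BE : (forall x, BE x -> in_b d N s p q x) ->
  subspace (in_b d N s p q) (czero d N) (cadd d N) (cscal d N) (embed_span d N s p lev sig BE).
Proof.
  intros HBE. split; [|split; [|split]].
  - intros x [l [Hl ->]]. apply (embed_span_in_b BE); auto.
  - exists nil. split; [intros _ []|]. simpl. rewrite embed_zero. reflexivity.
  - intros x y [l [Hl ->]] [l' [Hl' ->]]. exists (l ++ l'). split.
    + intros ax Hx. apply in_app_or in Hx; destruct Hx; auto.
    + rewrite lin_comb_app, embed_add. reflexivity.
  - intros a x [l [Hl ->]]. exists (map (fun ax => (Cmul a (fst ax), snd ax)) l). split.
    + intros ax Hx. apply in_map_iff in Hx. destruct Hx as [ay [<- Hy]]; simpl; auto.
    + rewrite lin_comb_scal, embed_scal. reflexivity.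
Qed.

Lemma max_lineable_critical :
  max_lineable_b d N s p q (fun c => in_b d N s p q c /\ is_lub (div_set d N psi c x0) (crit_exp d s p)).
Proof.
  destruct (hamel_basis_exists d N (in_b d N s p q)) as [BE [HBE1 [HBE2 HBE3]]].
  exists (embed_span d N s p lev sig BE). split; [|split].
  - apply (embed_span_subspace BE HBE1).
  - intros x [l [Hl ->]]. destruct (classic (lc l = czero d N)) as [Z|Z].
    + right. rewrite Z. apply embed_zero.
    + left. assert (exists i j k, lc l i j k <> C0) as [i [j [k Hne]]].
      { apply NNPP. intros Hn. apply Z. coef_ext. apply NNPP. intros H. apply Hn. eauto. }
      pose proof (embed_span_in_b BE l HBE1 Hl) as Hin. split; auto.
      apply (critical_is_lub d N psi s p q x0 Hp Hq Mp); auto.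
      apply (embed_critical d N psi s p x0 C lev sig HC Hlev Hsig (lc l) (i, j, k)); auto.
  - exists (embed_image d N s p lev sig BE), BE. split; [|split].
    + apply embed_image_hamel_basis; auto using lev_inj, sig_onto.
    + split; auto.
    + apply embed_image_same_card; auto using lev_inj, sig_onto.
Qed.

End Lineability.

Lemma borel_open {X} (E : X -> Prop) near U : openE E near U -> borel E near U.
Proof. intros H F _ HF. apply HF; auto. Qed.

Lemma borel_compl {X} (E : X -> Prop) near B : borel E near B -> borel E near (fun x => E x /\ ~ B x).
Proof. intros HB F HF Ho. apply (proj1 (proj2 HF)). apply HB; auto. Qed.

Lemma borel_union {X} (E : X -> Prop) near (Bn : nat -> X -> Prop) :
  (forall n, borel E near (Bn n)) -> borel E near (fun x => exists n, Bn n x).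
Proof. intros HB F HF Ho. apply (proj2 (proj2 HF)). intros n; apply HB; auto. Qed.

Lemma set_ext {X} (A B : X -> Prop) : (forall x, A x <-> B x) -> A = B.
Proof. intros H. apply functional_extensionality; intros x; apply propositional_extensionality; auto. Qed.

Definition unit_segment (t : R) : Prop := 0 <= t /\ t <= 1.

Record diffuse_unit_measure (lM : (R -> Prop) -> Prop) (lmu : (R -> Prop) -> R) : Prop := {
  dum_segment : lM unit_segment;
  dum_total : lmu unit_segment = 1;
  dum_compl : forall A, lM A -> lM (fun t => unit_segment t /\ ~ A t);
  dum_union : forall An : nat -> R -> Prop, (forall n, lM (An n)) -> lM (fun t => exists n, An n t);
  dum_ge0 : forall A, 0 <= lmu A;
  dum_subsingleton : forall A, (forall t t', A t -> A t' -> t = t') -> lmu A = 0;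
  dum_open : forall O, (forall t, O t -> unit_segment t) ->
    (forall t, O t -> exists eta, 0 < eta /\ forall t', unit_segment t' -> Rabs (t' - t) < eta -> O t') -> lM O;
  dum_sigma_additive : forall An : nat -> R -> Prop, (forall n, lM (An n)) ->
    (forall n t, An n t -> unit_segment t) -> (forall m n t, m <> n -> An m t -> An n t -> False) ->
    infinite_sum (fun n => lmu (An n)) (lmu (fun t => exists n, An n t)) }.

Section Segment_pushforward.

Context {X : Type} (E : X -> Prop) (near : X -> X -> R -> Prop) (g : R -> X).
Hypotheses (g_in : forall t, E (g t))
  (g_cont : forall t eps, 0 < eps -> exists eta, 0 < eta /\ forall t', Rabs (t' - t) < eta -> near (g t) (g t') eps).

Definition segment_image (x : X) : Prop := exists t, unit_segment t /\ x = g t.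

Definition segment_preimage (B : X -> Prop) (t : R) : Prop := unit_segment t /\ B (g t).

Lemma segment_image_compact : compactE E near segment_image.
Proof.
  split; [intros c [t [_ ->]]; auto|].
  intros Fam HFo HFc.
  assert (Hch : forall t, exists pr : (X -> Prop) * R, unit_segment t ->
      Fam (fst pr) /\ 0 < snd pr /\ forall t', Rabs (t' - t) < snd pr -> fst pr (g t')).
  { intros t. destruct (classic (unit_segment t)) as [Ht|Ht].
    - destruct (HFc (g t) (ex_intro _ t (conj Ht eq_refl))) as [U [HU HUg]].
      destruct (proj2 (HFo U HU) (g t) HUg) as [eps [Heps HUe]].
      destruct (g_cont t eps Heps) as [eta [Heta Hc]].
      exists (U, eta). intros _. cbn [fst snd]. repeat split; auto.
    - exists (fun _ => True, 1). intros H; contradiction. }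
  set (ch := fun t => proj1_sig (constructive_indefinite_description _ (Hch t))).
  assert (Hchp : forall t, unit_segment t ->
      Fam (fst (ch t)) /\ 0 < snd (ch t) /\ forall t', Rabs (t' - t) < snd (ch t) -> fst (ch t) (g t')).
  { intros t. exact (proj2_sig (constructive_indefinite_description _ (Hch t))). }
  assert (Hcond : forall t, (exists y, unit_segment t /\ Rabs (y - t) < snd (ch t)) -> unit_segment t).
  { intros t [y [H _]]; auto. }
  set (fam := mkfamily unit_segment (fun t y => unit_segment t /\ Rabs (y - t) < snd (ch t)) Hcond).
  destruct (compact_P3 0 1 fam) as [D [Hcov [l Hl]]].
  - split.
    + intros t Ht. exists t. simpl. split; auto. rewrite Rminus_diag, Rabs_R0. apply Hchp; auto.
    + intros t y [Ht Hy]. assert (Hd : 0 < snd (ch t) - Rabs (y - t)) by lra.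
      exists (mkposreal _ Hd). intros z Hz. unfold disc in Hz; simpl in Hz. split; auto.
      pose proof (Rabs_triang (z - y) (y - t)). replace (z - y + (y - t)) with (z - t) in H by ring. lra.
  - exists (map (fun t => fst (ch t)) l). split.
    + intros U HU. apply in_map_iff in HU. destruct HU as [t [<- Ht]]. apply Hl in Ht. apply Hchp, Ht.
    + intros c [t' [Ht' ->]]. destruct (Hcov t' Ht') as [y [[Hy1 Hy2] HyD]].
      exists (fst (ch y)). split.
      * apply (in_map (fun t => fst (ch t))). apply Hl. split; auto.
      * apply Hchp; auto.
Qed.

Variables (lM : (R -> Prop) -> Prop) (lmu : (R -> Prop) -> R).
Hypothesis Hmu : diffuse_unit_measure lM lmu.

Definition pushforward (B : X -> Prop) : R := lmu (segment_preimage B).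

Lemma segment_preimage_union (Bn : nat -> X -> Prop) :
  segment_preimage (fun x => exists n, Bn n x) = fun t => exists n, segment_preimage (Bn n) t.
Proof. apply set_ext. intros t. unfold segment_preimage. split; [intros [H1 [n H2]]|intros [n [H1 H2]]]; eauto. Qed.

Lemma segment_preimage_E : segment_preimage E = unit_segment.
Proof. apply set_ext. intros t. unfold segment_preimage. split; [tauto|]. intros H; split; auto. Qed.

Lemma borel_segment_preimage B : borel E near B -> lM (segment_preimage B).
Proof.
  intros HB. apply (HB (fun B => lM (segment_preimage B))).
  - split; [|split].
    + rewrite segment_preimage_E. apply (dum_segment _ _ Hmu).
    + intros A HA. replace (segment_preimage (fun x => E x /\ ~ A x))
        with (fun t => unit_segment t /\ ~ segment_preimage A t); [apply (dum_compl _ _ Hmu); auto|].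
      apply set_ext. intros t. unfold segment_preimage. pose proof (g_in t). tauto.
    + intros An HA. rewrite segment_preimage_union. apply (dum_union _ _ Hmu); auto.
  - intros U [HUE HUo]. apply (dum_open _ _ Hmu); [intros t [Ht _]; auto|].
    intros t [Ht HUt]. destruct (HUo _ HUt) as [eps [Heps HUe]].
    destruct (g_cont t eps Heps) as [eta [Heta Hc]].
    exists eta. split; auto. intros t' Ht' Hd. split; auto.
Qed.

Lemma pushforward_borel_prob : borel_prob E near pushforward.
Proof.
  split; [|split; [|split]].
  - intros B _. apply (dum_ge0 _ _ Hmu).
  - unfold pushforward. rewrite segment_preimage_E. apply (dum_total _ _ Hmu).
  - intros B B' _ H. unfold pushforward. f_equal. apply set_ext. intros t.
    unfold segment_preimage. rewrite (H (g t)). tauto.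
  - intros Bn HB Hdisj. unfold pushforward. rewrite segment_preimage_union.
    apply (dum_sigma_additive _ _ Hmu).
    + intros n; apply borel_segment_preimage; auto.
    + intros n t [H _]; auto.
    + intros m n t Hmn [_ H1] [_ H2]. eapply Hdisj; eauto.
Qed.

Lemma pushforward_compactly_supported : compactly_supported E near pushforward.
Proof.
  exists segment_image. split; [apply segment_image_compact|].
  unfold pushforward. replace (segment_preimage segment_image) with unit_segment; [apply (dum_total _ _ Hmu)|].
  apply set_ext. intros t. unfold segment_preimage, segment_image. split; [intros H; split; eauto|tauto].
Qed.

End Segment_pushforward.

Section Prevalence.

Variables (d N : nat) (psi : Fin.t N -> Rvec d -> Cpx) (s : R) (p q : Exp) (x0 : Rvec d).
Hypotheses (Hp : Exp_pos p) (Hq : Exp_pos q).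
Variable Mp : R.
Hypotheses (Mp_ge0 : 0 <= Mp) (psi_le : forall i y, Cmod (psi i y) <= Mp).

Notation big := (big_coef_set d N psi s p q x0).

Lemma divergent_iff_big_coef c g : in_b d N s p q c ->
  (divergent d N psi x0 c g <-> exists r, forall n, big (fun j => / INR (S r) * Rpower 2 (g * INR j)) n c).
Proof.
  intros Hc. split.
  - intros [K [HK H]]. destruct (inv_INR_S_lt K HK) as [r Hr]. exists r. intros n. split; auto.
    destruct (H n) as [i [j [k [Hj Hge]]]]. exists i, j, k. split; auto.
    pose proof (Rpower2_pos (g * INR j)).
    assert (/ INR (S r) * Rpower 2 (g * INR j) < K * Rpower 2 (g * INR j)) by (apply Rmult_lt_compat_r; auto).
    lra.
  - intros [r H]. exists (/ INR (S r)). split; [apply Rinv_0_lt_compat, lt_0_INR; lia|].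
    intros n. destruct (H n) as [_ [i [j [k [Hj Hgt]]]]]. exists i, j, k. split; auto. lra.
Qed.

Lemma not_critical_borel :
  borel (in_b d N s p q) (bnear d N s p q) (fun c => in_b d N s p q c /\ ~ critical d N psi s p x0 c).
Proof.
  set (E := in_b d N s p q).
  set (O := fun m r n => big (fun j => / INR (S r) * Rpower 2 ((crit_exp d s p - / INR (S m)) * INR j)) n).
  set (G := fun m r c => exists n, E c /\ ~ O m r n c).
  set (H := fun m c => E c /\ ~ (exists r, E c /\ ~ G m r c)).
  replace (fun c => E c /\ ~ critical d N psi s p x0 c) with (fun c => exists m, H m c).
  - apply borel_union. intros m. apply borel_compl. apply borel_union. intros r. apply borel_compl.
    apply borel_union. intros n. apply borel_compl. apply borel_open.
    apply (big_coef_set_open d N psi s p q x0 Hp Hq Mp); auto.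
  - apply set_ext. intros c. split.
    + intros [m [Ec Hm]]. split; auto. intros HD.
      destruct (proj1 (divergent_iff_big_coef c _ Ec) (HD m)) as [r Hr].
      apply Hm. exists r. split; auto. intros [n [_ Hn]]. apply Hn. apply Hr.
    + intros [Ec HD]. apply not_all_ex_not in HD. destruct HD as [m Hm]. exists m. split; auto.
      intros [r [_ Hr]]. apply Hm. apply (proj2 (divergent_iff_big_coef c _ Ec)). exists r. intros n.
      apply NNPP. intros Hn. apply Hr. exists n. split; auto.
Qed.

Variables (C : R) (lev sig : nat -> index d N) (i0 : Fin.t N).
Hypotheses (HC : 0 < C) (Hlev : good_cubes d N psi x0 C lev) (Hsig : visits_often sig).

Notation T := (embed d N s p lev sig).

Definition unit_coef : Coef d N :=
  fun i j k => if excluded_middle_informative ((i, j, k) = (i0, 0%nat, zvec0 d)) then (1, 0) else C0.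

Definition probe (t : R) : Coef d N := T (cscal d N (t, 0) unit_coef).

Lemma probe_bnorm_le t : exists B, bnorm d N s p q (probe t) = Some B /\ B <= Rabs t * geom_const q.
Proof.
  apply (embed_bnorm_le d N s p q Hp Hq lev sig (proj1 Hlev)); auto using Rabs_pos.
  intros i j k. unfold wcoef, cscal, unit_coef. destruct (excluded_middle_informative _) as [E|E].
  - inversion E; subst. unfold weight. simpl. rewrite Rmult_0_r, Rpower_O by lra.
    replace (Cmul (t, 0) (1, 0)) with (t, 0) by (unfold Cmul; cbn [fst snd]; f_equal; ring).
    rewrite Cmod_real. lra.
  - replace (Cmul (t, 0) C0) with C0 by (unfold Cmul, C0; cbn [fst snd]; f_equal; ring).
    rewrite Cmod_C0, Rmult_0_l. apply Rabs_pos.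
Qed.

Lemma probe_in_b t : in_b d N s p q (probe t).
Proof. destruct (probe_bnorm_le t) as [B [EB _]]. exists B; exact EB. Qed.

Lemma probe_sub t t' : csub d N (probe t) (probe t') = probe (t - t').
Proof.
  unfold probe. rewrite <- embed_sub. f_equal. coef_ext. unfold csub, cscal.
  destruct (unit_coef i j k). unfold Cadd, Copp, Cmul; cbn [fst snd]; f_equal; ring.
Qed.

Lemma probe_critical t : t <> 0 -> critical d N psi s p x0 (probe t).
Proof.
  intros Ht. apply (embed_critical d N psi s p x0 C lev sig HC Hlev Hsig _ (i0, 0%nat, zvec0 d)).
  unfold cidx, cscal, unit_coef. cbn [fst snd].
  destruct (excluded_middle_informative _) as [_|n]; [|exfalso; apply n; auto].
  unfold Cmul, C0; cbn [fst snd]. intros E. inversion E. apply Ht. lra.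
Qed.

Lemma probe_continuous t eps : 0 < eps ->
  exists eta, 0 < eta /\ forall t', Rabs (t' - t) < eta -> bnear d N s p q (probe t) (probe t') eps.
Proof.
  intros He. pose proof (geom_const_ge0 q).
  exists (eps / (geom_const q + 1)). split; [unfold Rdiv; apply Rmult_lt_0_compat; [lra|apply Rinv_0_lt_compat; lra]|].
  intros t' Ht'. unfold bnear. rewrite probe_sub.
  destruct (probe_bnorm_le (t' - t)) as [B [EB HB]]. exists B. split; auto.
  assert (Rabs (t' - t) * geom_const q <= Rabs (t' - t) * (geom_const q + 1))
    by (apply Rmult_le_compat_l; [apply Rabs_pos|lra]).
  assert (Rabs (t' - t) * (geom_const q + 1) < eps).
  { apply (Rmult_lt_compat_r (geom_const q + 1)) in Ht'; [|lra].
    unfold Rdiv in Ht'. rewrite Rmult_assoc, Rinv_l in Ht' by lra. lra. }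
  lra.
Qed.

Lemma prevalent_critical lM lmu : diffuse_unit_measure lM lmu ->
  prevalent_b d N s p q (fun c => in_b d N s p q c /\ is_lub (div_set d N psi c x0) (crit_exp d s p)).
Proof.
  intros Hmu. set (E := in_b d N s p q). set (near := bnear d N s p q).
  exists (fun c => E c /\ ~ critical d N psi s p x0 c). split.
  - split; [apply not_critical_borel|].
    exists (pushforward probe lmu). split; [|split].
    + exact (pushforward_borel_prob E near probe probe_in_b probe_continuous lM lmu Hmu).
    + exact (pushforward_compactly_supported E near probe probe_in_b probe_continuous lM lmu Hmu).
    + intros x Hx. unfold pushforward. apply (dum_subsingleton _ _ Hmu).
      intros t t' [_ [_ [_ Hbt]]] [_ [_ [_ Hbt']]]. apply NNPP. intros Hne.
      apply (not_critical_csub d N psi s p x0 _ _ Hbt Hbt').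
      replace (csub d N (csub d N (probe t) x) (csub d N (probe t') x)) with (probe (t - t')).
      * apply probe_critical. intros H; apply Hne; lra.
      * rewrite <- probe_sub. coef_ext. unfold csub.
        destruct (probe t i j k), (probe t' i j k), (x i j k). unfold Cadd, Copp; cbn [fst snd]; f_equal; ring.
  - intros c [Hc HD]. split; auto. intros Hcrit. apply HD. split; auto.
    apply (critical_is_lub d N psi s p q x0 Hp Hq Mp); auto.
Qed.

End Prevalence.
From mathcomp Require all_boot all_order all_algebra all_classical all_reals all_analysis.
From mathcomp Require Rstruct Rstruct_topology lra measurable_realfun.

Module Lebesgue_segment.
Import all_boot all_order all_algebra.
Import all_classical all_reals all_analysis.
Import Rstruct Rstruct_topology.
Import lra measurable_realfun.
Import Order.TTheory GRing.Theory Num.Theory.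
Import numFieldNormedType.Exports.
Local Open Scope classical_set_scope.
Local Open Scope ring_scope.

Definition lmu (A : Rdefinitions.R -> Prop) : Rdefinitions.R := fine (@lebesgue_measure Rdefinitions.R A).
Definition lM (A : Rdefinitions.R -> Prop) : Prop := @measurable _ (measurableTypeR Rdefinitions.R) A.

Lemma unit_segment_itv : unit_segment = [set` `[0%R, 1%R]] :> set Rdefinitions.R.
Proof.
  apply/seteqP; split => x /=; rewrite /unit_segment in_itv /=.
  - by move=> [/RleP -> /RleP ->].
  - by move=> /andP [/RleP H1 /RleP H2].
Qed.

Lemma lM_segment : lM unit_segment.
Proof. rewrite /lM unit_segment_itv. exact: measurable_itv. Qed.

Lemma lmu_segment : lmu unit_segment = 1.
Proof. rewrite /lmu unit_segment_itv lebesgue_measure_itv /= lte_fin ltr01 /=. rewrite oppr0 /=. by rewrite addr0. Qed.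

Lemma lM_compl A : lM A -> lM (fun t => unit_segment t /\ ~ A t).
Proof.
  move=> HA. have -> : (fun t => unit_segment t /\ ~ A t) = unit_segment `\` A by [].
  exact: measurableD lM_segment HA.
Qed.

Lemma lM_union (An : nat -> Rdefinitions.R -> Prop) : (forall n, lM (An n)) -> lM (fun t => exists n, An n t).
Proof.
  move=> H. have -> : (fun t => exists n, An n t) = \bigcup_n An n.
    by apply/seteqP; split => x /= [n]; [exists n|exists n].
  exact: bigcupT_measurable.
Qed.

Lemma lmu_ge0 A : Rle 0 (lmu A).
Proof. apply/RleP. rewrite /lmu. apply: fine_ge0. exact: measure_ge0. Qed.

Lemma lmu_fin A : lM A -> (forall t, A t -> unit_segment t) ->
  (@lebesgue_measure Rdefinitions.R A = (lmu A)%:E) /\ Rle (lmu A) 1.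
Proof.
  move=> HA Hsub.
  have Hle : (@lebesgue_measure Rdefinitions.R A <= @lebesgue_measure Rdefinitions.R unit_segment)%E.
    by apply: le_measure => //; rewrite inE //; exact: lM_segment.
  have H1 : @lebesgue_measure Rdefinitions.R unit_segment = 1%E.
    by rewrite unit_segment_itv lebesgue_measure_itv /= lte_fin ltr01 /= oppr0 /= addr0.
  have Hfin : @lebesgue_measure Rdefinitions.R A \is a fin_num.
    rewrite ge0_fin_numE; last exact: measure_ge0.
    by apply: (le_lt_trans Hle); rewrite H1 ltry.
  split; first by rewrite /lmu fineK.
  apply/RleP. rewrite /lmu -lee_fin fineK //. by rewrite -H1.
Qed.

Lemma lmu_sub1 A : (forall t t', A t -> A t' -> t = t') -> lmu A = 0.
Proof.
  move=> Hs. case: (pselect (exists t, A t)) => [[t0 Ht0]|Hn].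
  - have -> : A = [set t0].
      apply/seteqP; split => x /=; first by move=> Hx; exact: (Hs _ _ Hx Ht0).
      by move=> ->.
    by rewrite /lmu lebesgue_measure_set1.
  - have -> : A = set0. by apply/seteqP; split => x // Hx; apply: Hn; exists x.
    by rewrite /lmu measure0.
Qed.

Lemma lM_relopen (O : Rdefinitions.R -> Prop) : (forall t, O t -> unit_segment t) ->
  (forall t, O t -> exists eta, Rlt 0 eta /\ forall t', unit_segment t' -> Rlt (Rabs (Rminus t' t)) eta -> O t') -> lM O.
Proof.
  move=> Hsub Hop.
  have [eta Heta] : exists eta : Rdefinitions.R -> Rdefinitions.R, forall t, O t ->
      Rlt 0 (eta t) /\ forall t', unit_segment t' -> Rlt (Rabs (Rminus t' t)) (eta t) -> O t'.
    have Hex : forall t, exists e, O t -> Rlt 0 e /\ forall t', unit_segment t' -> Rlt (Rabs (Rminus t' t)) e -> O t'.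
      move=> t. case: (pselect (O t)) => [Ot|nOt].
      - by have [e He] := Hop t Ot; exists e.
      - by exists 0.
    exists (fun t => proj1_sig (cid (Hex t))) => t. exact: (proj2_sig (cid (Hex t))).
  have -> : O = unit_segment `&` \bigcup_(t in O) [set` `]t - eta t, t + eta t[].
    apply/seteqP; split => x /=.
    - move=> Ox; split; first exact: Hsub. exists x => //=. rewrite in_itv /=.
      have := (proj1 (Heta x Ox)) => /RltP H. rewrite R0E in H. apply/andP; split; lra.
    - move=> [Ux [t Ot]] /=. rewrite in_itv /= => /andP [H1 H2].
      apply: (proj2 (Heta t Ot)) => //. apply: Rabs_def1.
      + apply/RltP. rewrite RminusE. lra.
      + apply/RltP. rewrite RminusE RoppE. lra.
  apply: measurableI; first exact: lM_segment.
  apply: open_measurable. apply: bigcup_open => t _. exact: interval_open.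
Qed.

Lemma lmu_sigma (An : nat -> Rdefinitions.R -> Prop) : (forall n, lM (An n)) ->
  (forall n t, An n t -> unit_segment t) -> (forall m n t, m <> n -> An m t -> An n t -> False) ->
  infinite_sum (fun n => lmu (An n)) (lmu (fun t => exists n, An n t)).
Proof.
  move=> HM Hsub Hdisj.
  have Htriv : trivIset setT An.
    move=> i j _ _ [x [Hi Hj]]. case: (pselect (i = j)) => [//|Hne]. by case: (Hdisj _ _ _ Hne Hi Hj).
  have Hs := @measure_sigma_additive _ _ _ (@lebesgue_measure Rdefinitions.R) An HM Htriv.
  have HU : \bigcup_n An n = (fun t => exists n, An n t).
    by apply/seteqP; split => x /= [n]; [exists n|exists n].
  rewrite HU in Hs.
  have HUM : lM (fun t => exists n, An n t) by apply: lM_union.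
  have [HUe _] := lmu_fin _ HUM (fun t => fun '(ex_intro n Hn) => Hsub n t Hn).
  have Hei : forall i, @lebesgue_measure Rdefinitions.R (An i) = (lmu (An i))%:E.
    by move=> i; have [] := lmu_fin _ (HM i) (Hsub i).
  have Hs' : (fun n => (\sum_(0 <= i < n) lmu (An i))%:E) @ \oo --> (lmu (fun t => exists n, An n t))%:E.
    rewrite -HUe. apply: cvg_trans Hs. apply: near_eq_cvg. near=> n => /=.
    rewrite -sumEFin. apply: eq_bigr => i _. exact: Hei i.
  have Hf : (fun n => (\sum_(0 <= i < n) lmu (An i))%R) @ \oo --> lmu (fun t => exists n, An n t).
    by move/fine_cvgP: Hs' => [_ Hs'].
  move=> eps /RltP Heps.
  have [N _ HN] := @cvgr_dist_lt _ Rdefinitions.R^o _ _ _ (fun n => (\sum_(0 <= i < n) lmu (An i))%R)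
    (lmu (fun t => exists n, An n t)) Hf _ Heps.
  exists N => n Hn. rewrite /R_dist RabsE RminusE sum_f_R0E distrC. apply/RltP. apply: HN => /=.
  apply/ssrnat.leP. lia.
Unshelve. all: by end_near.
Qed.

Lemma lebesgue_diffuse_unit_measure : diffuse_unit_measure lM lmu.
Proof.
  exact (Build_diffuse_unit_measure lM lmu lM_segment lmu_segment lM_compl lM_union lmu_ge0 lmu_sub1
    lM_relopen lmu_sigma).
Qed.

End Lebesgue_segment.

Lemma wavelets_uniformly_bounded d N (psi : Fin.t N -> Rvec d -> Cpx) :
  (forall i, bounded_fun d (psi i)) -> exists M, 0 <= M /\ forall i y, Cmod (psi i y) <= M.
Proof.
  induction N as [|N IH]; intros Hb.
  - exists 0. split; [lra|]. intros i. apply Fin.case0. exact i.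
  - destruct (IH (fun i => psi (Fin.FS i))) as [M1 [HM1 H1]]; [intros i; apply Hb|].
    destruct (Hb Fin.F1) as [M0 H0].
    exists (Rmax M0 M1). split; [eapply Rle_trans; [exact HM1|apply Rmax_r]|].
    intros i y. apply (Fin.caseS' i).
    + eapply Rle_trans; [apply H0|apply Rmax_l].
    + intros i'. eapply Rle_trans; [apply H1|apply Rmax_r].
Qed.

Theorem mainTheorem16 (d N : nat) (psi : Fin.t N -> Rvec d -> Cpx)
  (s : R) (p q : Exp) (x0 : Rvec d) :
  (1 <= d)%nat -> (1 <= N)%nat ->
  (forall i, bounded_fun d (psi i)) ->
  (forall i, fast_decaying d (psi i)) ->
  Exp_pos p -> Exp_pos q ->
  dyadic_covering d N psi ->
  let D := fun c : Coef d N =>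
    in_b d N s p q c /\ is_lub (div_set d N psi c x0) (- s + INR d * inv_exp p) in
  prevalent_b d N s p q D /\ residual_b d N s p q D /\ max_lineable_b d N s p q D.
Proof.
  intros _ HN Hb _ Hp Hq Hcov D.
  assert (i0 : Fin.t N) by (destruct N as [|N']; [lia|exact Fin.F1]).
  destruct (wavelets_uniformly_bounded d N psi Hb) as [Mp [HMp HM]].
  destruct (good_cubes_exist d N psi x0 Hcov) as [C [lev [HC Hlev]]].
  destruct (index_visits_often d N i0) as [sig Hsig].
  split; [|split].
  - exact (prevalent_critical d N psi s p q x0 Hp Hq Mp HMp HM C lev sig i0 HC Hlev Hsig _ _
      Lebesgue_segment.lebesgue_diffuse_unit_measure).
  - exact (residual_critical d N psi s p q x0 Hp Hq Mp HMp HM C lev HC Hlev).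
  - exact (max_lineable_critical d N psi s p q x0 Hp Hq Mp HM C lev sig i0 HC Hlev Hsig).
Qed.
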